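(* Let $\psi\in\mathcal{C}(\mathbb{X})$ be such that $\psi_\Omega$ belongs to $\mathcal{C}^1(SE(2))$ and is supported in $\mathbb{D}_{1/4}^\circ$, where $\psi_\Omega(\mathbf{g})=\psi(\mathbb{L}\mathbf{g})$ for $\mathbf{g}\in\Omega$ and $\psi_\Omega(\mathbf{g})=0$ otherwise. Let $\rho\in\mathcal{C}^1(SE(2))$ be supported in $\mathbb{D}_{1/4}$ and radial in translations. Then there is a constant $C>0$ (depending only on $\psi,\rho$) such that for all $\mathbf{K}\in\mathbb{N}^3$ and all $\mathbf{k}\in\mathbb{Z}^3$ with $|\mathbf{k}|\le\mathbf{K}$, \[ \left|\widehat{\psi\oslash\rho}\{\mathbf{k};2\mathbf{K}+1\}-\widehat{\psi}\{\mathbf{k};2\mathbf{K}+1\}\,\widehat{\rho}[\mathbf{k};2\mathbf{K}+1]\right|\le\frac{C}{\min(\mathbf{K})}. \]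
   Context: $SE(2)=\mathbb{R}^2\rtimes SO(2)$ with group law $(\mathbf{x},\mathbf{R})\circ(\mathbf{x}',\mathbf{R}')=(\mathbf{x}+\mathbf{R}\mathbf{x}',\mathbf{R}\mathbf{R}')$, elements parametrized by $(x,y,\theta)\in\mathbb{R}^2\times[0,2\pi)$, Haar measure $\frac{1}{2\pi}\mathrm{d}x\,\mathrm{d}y\,\mathrm{d}\theta$. $\mathbb{L}=\{(\boldsymbol{\ell},\mathbf{I}):\boldsymbol{\ell}\in\mathbb{Z}^2\}$, $\mathbb{X}=\mathbb{L}\backslash SE(2)$, $\mu$ its normalized invariant measure. $\Omega=[-\tfrac12,\tfrac12)^2\times SO(2)$. For $\psi\in L^1(\mathbb{X},\mu)$, $g\in L^1(SE(2))$: $(\psi\oslash g)(\mathbb{L}\mathbf{g})=\int_{SE(2)}\psi(\mathbb{L}\mathbf{h})g(\mathbf{h}^{-1}\circ\mathbf{g})\,\mathrm{d}\mathbf{h}$. $\mathcal{C}^1(SE(2))$: continuously differentiable in $(x,y,\theta)$, $2\pi$-periodic in $\theta$. $\mathbb{D}_a=\{(\mathbf{x},\mathbf{R}):\|\mathbf{x}\|_2\le a\}$, $\mathbb{D}_a^\circ=\{(\mathbf{x},\mathbf{R}):\|\mathbf{x}\|_2<a\}$. $\rho$ radial in translations: $\rho(\mathbf{x},\mathbf{R})=\rho(\mathbf{S}\mathbf{x},\mathbf{R})$ for all $\mathbf{x}$, $\mathbf{R},\mathbf{S}\in SO(2)$. For $\mathbf{k}\in\mathbb{Z}^3$, $\phi_{\mathbf{k}}(x,y,\theta)=e^{2\pi\mathrm{i}(k_1x+k_2y)}e^{\mathrm{i}k_3\theta}$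 and $\varphi_{\mathbf{k}}(\mathbb{L}(x,y,\theta))=\phi_{\mathbf{k}}(x,y,\theta)$. For $\mathbf{L}=(L_{\mathrm x},L_{\mathrm y},L_{\mathrm r})\in\mathbb{N}^3$, grid points $x_i=-\tfrac12+\tfrac{i-1}{L_{\mathrm x}}$, $y_j=-\tfrac12+\tfrac{j-1}{L_{\mathrm y}}$, $\theta_l=\tfrac{2\pi(l-1)}{L_{\mathrm r}}$; for $\chi:\mathbb{X}\to\mathbb{C}$, $\widehat{\chi}\{\mathbf{k};\mathbf{L}\}=\frac{1}{L_{\mathrm x}L_{\mathrm y}L_{\mathrm r}}\sum_{i,j,l}\chi(\mathbb{L}(x_i,y_j,\theta_l))\overline{\varphi_{\mathbf{k}}(\mathbb{L}(x_i,y_j,\theta_l))}$, and for $g$ on $SE(2)$, $\widehat{g}[\mathbf{k};\mathbf{L}]=\frac{1}{L_{\mathrm x}L_{\mathrm y}L_{\mathrm r}}\sum_{i,j,l}g(x_i,y_j,\theta_l)\overline{\phi_{\mathbf{k}}(x_i,y_j,\theta_l)}$. For $\mathbf{K}\in\mathbb{N}^3$: $2\mathbf{K}+1$ componentwise, $\min(\mathbf{K})$ smallest entry, $|\mathbf{k}|\le\mathbf{K}$ componentwise. *)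

From Stdlib Require Import Reals.
From Coquelicot Require Import Coquelicot.
Open Scope R_scope.

(* Elements of SE(2) in coordinates (x, y, theta): ((x, y), theta). *)
Definition SE2 := (R * R * R)%type.
Definition px (g : SE2) : R := fst (fst g).
Definition py (g : SE2) : R := snd (fst g).
Definition pt (g : SE2) : R := snd g.

(* A function on X = L \ SE(2) is represented by its lift to SE(2), i.e. a
   function of (x,y,theta) that is Z^2-periodic in translations and
   2pi-periodic in theta (group elements (x, R_theta)). *)
Definition on_X (psi : SE2 -> C) : Prop :=
  (forall (l1 l2 : Z) x y t, psi (x + IZR l1, y + IZR l2, t) = psi (x, y, t)) /\
  (forall x y t, psi (x, y, t + 2 * PI) = psi (x, y, t)).

(* psi in C(X): continuity on the quotient = continuity of the lift. *)
Definition cont_X (psi : SE2 -> C) : Prop :=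
  on_X psi /\ forall g : SE2, continuous psi g.

Definition C1_SE2 (f : SE2 -> C) : Prop :=
  (forall x y t, f (x, y, t + 2 * PI) = f (x, y, t)) /\
  exists fx fy ft : SE2 -> C,
    (forall x y t, @is_derive R_AbsRing C_R_NormedModule
                     (fun s => f (s, y, t)) x (fx (x, y, t))) /\
    (forall x y t, @is_derive R_AbsRing C_R_NormedModule
                     (fun s => f (x, s, t)) y (fy (x, y, t))) /\
    (forall x y t, @is_derive R_AbsRing C_R_NormedModule
                     (fun s => f (x, y, s)) t (ft (x, y, t))) /\
    (forall g, continuous fx g) /\ (forall g, continuous fy g) /\
    (forall g, continuous ft g).

Definition Dcl (a : R) (g : SE2) : Prop := sqrt (px g ^ 2 + py g ^ 2) <= a.
Definition Dop (a : R) (g : SE2) : Prop := sqrt (px g ^ 2 + py g ^ 2) < a.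

(* supp f ⊆ A, where supp f is the closure of {f <> 0}: every point outside A
   has a neighbourhood on which f vanishes. *)
Definition supported_in (f : SE2 -> C) (A : SE2 -> Prop) : Prop :=
  forall g, ~ A g -> locally g (fun q => f q = 0%C).

Definition radial (rho : SE2 -> C) : Prop :=
  forall x y t phi,
    rho (cos phi * x - sin phi * y, sin phi * x + cos phi * y, t) = rho (x, y, t).

Definition psiOmega (psi : SE2 -> C) (g : SE2) : C :=
  if Rle_dec (-/2) (px g) then
   if Rlt_dec (px g) (/2) then
    if Rle_dec (-/2) (py g) then
     if Rlt_dec (py g) (/2) then psi g else 0%C
    else 0%C
   else 0%C
  else 0%C.

(* h^{-1} o g for h = (u,v,s), g = (x,y,t):
   (R_s^{-1} (x-u, y-v), theta = t - s). *)
Definition se2_inv_mul (h g : SE2) : SE2 :=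
  let a := px g - px h in
  let b := py g - py h in
  let s := pt h in
  (cos s * a + sin s * b, - sin s * a + cos s * b, pt g - pt h).

(* Integral over SE(2) w.r.t. the Haar measure (1/2pi) dx dy dtheta. *)
Definition int_SE2 (F : SE2 -> C) : C :=
  scal (/ (2 * PI))
   (@RInt_gen C_R_CompleteNormedModule (fun u =>
      @RInt_gen C_R_CompleteNormedModule (fun v =>
         @RInt C_R_CompleteNormedModule (fun s => F (u, v, s)) 0 (2 * PI))
       (Rbar_locally m_infty) (Rbar_locally p_infty))
     (Rbar_locally m_infty) (Rbar_locally p_infty)).

(* (psi ⊘ g)(L g) = ∫ psi(L h) g(h^{-1} o g) dh, written on representatives. *)
Definition conv (psi rho : SE2 -> C) (g : SE2) : C :=
  int_SE2 (fun h => Cmult (psi h) (rho (se2_inv_mul h g))).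

Definition cexpi (a : R) : C := (cos a, sin a).

Definition phik (k : Z * Z * Z) (g : SE2) : C :=
  Cmult (cexpi (2 * PI * (IZR (fst (fst k)) * px g + IZR (snd (fst k)) * py g)))
        (cexpi (IZR (snd k) * pt g)).

(* Discrete Fourier coefficient on the grid
   x_i = -1/2 + (i-1)/Lx, y_j = -1/2 + (j-1)/Ly, theta_l = 2pi(l-1)/Lr;
   the same formula defines both  chi^{k;L} (on X) and g^[k;L] (on SE(2)). *)
Definition dft (f : SE2 -> C) (k : Z * Z * Z) (L : nat * nat * nat) : C :=
  let Lx := fst (fst L) in let Ly := snd (fst L) in let Lr := snd L in
  scal (/ (INR Lx * INR Ly * INR Lr))
   (sum_n_m (fun i =>
     sum_n_m (fun j =>
      sum_n_m (fun l =>
        let g : SE2 := (- / 2 + INR (i - 1) / INR Lx,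
                        - / 2 + INR (j - 1) / INR Ly,
                        2 * PI * INR (l - 1) / INR Lr) in
        Cmult (f g) (Cconj (phik k g))) 1 Lr) 1 Ly) 1 Lx).

(* psi (through the periodic lift of psi_Omega, which is C^1 with support inside the
   fundamental domain) and rho are bounded and Lipschitz in each variable.  Radiality
   of rho turns rho(h^{-1} g) into rho(g - h) coordinatewise, so psi ⊘ rho is an
   ordinary convolution integral, and replacing it by its Riemann sum on the grid
   translated by the evaluation point costs O(1/L) uniformly.  The discrete Fourier
   coefficient of that Riemann sum factorizes exactly (discrete convolution theorem)
   into the coefficient of rho times the coefficient of psi sampled on the grid i/L.
   As L = 2K + 1 is odd, that grid is the DFT grid -1/2 + i/L moved by half a mesh;
   for |k| <= K the half-mesh phase e^{-i pi k / L} has nonnegative real part, and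
   summation by parts shows that this shift costs O(1/L) as well. *)

From Stdlib Require Import Reals Lra Lia ZArith.
From Coquelicot Require Import Coquelicot.
From Stdlib Require Import Classical ClassicalEpsilon FunctionalExtensionality.
Open Scope R_scope.

Lemma scal_C (r : R) (z : C) : scal r z = Cmult (RtoC r) z.
Proof.
  destruct z as [a b]. unfold Cmult, RtoC; simpl.
  apply injective_projections; simpl; unfold scal; simpl; unfold mult; simpl; ring.
Qed.

Lemma Cmod_RtoC_mult_le (r : R) (z : C) e :
  0 <= r -> Cmod z <= e -> Cmod (Cmult (RtoC r) z) <= r * e.
Proof.
  intros Hr Hz. rewrite Cmod_mult, Cmod_R, Rabs_right by lra.
  apply Rmult_le_compat_l; auto.
Qed.

Lemma Cmult_minus_distr_l (c a b : C) : Cminus (Cmult c a) (Cmult c b) = Cmult c (Cminus a b).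
Proof. ring. Qed.

Fixpoint csum (n : nat) (F : nat -> C) : C :=
  match n with O => RtoC 0 | S m => Cplus (csum m F) (F m) end.

Lemma sum_n_m_csum (F : nat -> C) (L : nat) :
  sum_n_m F 1 L = csum L (fun j => F (S j)).
Proof.
  induction L.
  - rewrite sum_n_m_zero; [reflexivity | lia].
  - rewrite sum_n_Sm by lia. rewrite IHL. reflexivity.
Qed.

Lemma csum_ext n F G : (forall i, (i < n)%nat -> F i = G i) -> csum n F = csum n G.
Proof.
  induction n; intros H; simpl; auto.
  rewrite IHn by (intros; apply H; lia). rewrite H by lia. reflexivity.
Qed.

Lemma csum_minus n F G :
  csum n (fun i => Cminus (F i) (G i)) = Cminus (csum n F) (csum n G).
Proof. induction n; simpl. ring. rewrite IHn. ring. Qed.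

Lemma csum_plus n F G :
  csum n (fun i => Cplus (F i) (G i)) = Cplus (csum n F) (csum n G).
Proof. induction n; simpl. ring. rewrite IHn. ring. Qed.

Lemma csum_mull n c F : csum n (fun i => Cmult c (F i)) = Cmult c (csum n F).
Proof. induction n; simpl. ring. rewrite IHn. ring. Qed.

Lemma csum_mulr n c F : csum n (fun i => Cmult (F i) c) = Cmult (csum n F) c.
Proof. induction n; simpl. ring. rewrite IHn. ring. Qed.

Lemma csum_swap n m (F : nat -> nat -> C) :
  csum n (fun i => csum m (fun j => F i j)) = csum m (fun j => csum n (fun i => F i j)).
Proof.
  induction n; simpl.
  - induction m; simpl; auto. rewrite <- IHm. ring.
  - rewrite IHn, <- csum_plus. reflexivity.
Qed.

Lemma csumS n F : csum (S n) F = Cplus (F O) (csum n (fun i => F (S i))).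
Proof. induction n; simpl. ring. simpl in IHn. rewrite IHn. ring. Qed.

Lemma Cmod_csum_le n F M :
  (forall i, (i < n)%nat -> Cmod (F i) <= M) -> Cmod (csum n F) <= INR n * M.
Proof.
  induction n; intros H; cbn [csum].
  - rewrite Cmod_0. simpl. lra.
  - eapply Rle_trans. apply Cmod_triangle.
    rewrite S_INR. specialize (IHn (fun i Hi => H i ltac:(lia))).
    specialize (H n ltac:(lia)). lra.
Qed.

Lemma Cmod_csum_minus_le n F G e :
  (forall i, (i < n)%nat -> Cmod (Cminus (F i) (G i)) <= e) ->
  Cmod (Cminus (csum n F) (csum n G)) <= INR n * e.
Proof. intros H. rewrite <- csum_minus. apply Cmod_csum_le. auto. Qed.

Lemma csum_shift_periodic (L : nat) (phi : R -> C) r j :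
  (1 <= L)%nat -> (forall x, phi (x + INR L) = phi x) ->
  csum L (fun a => phi (INR a + r - INR j)) = csum L (fun a => phi (INR a + r)).
Proof.
  intros HL Hp. revert r. induction j; intros r.
  - apply csum_ext. intros. f_equal. simpl. ring.
  - destruct L as [|L]; [lia|].
    rewrite <- (IHj r), csumS. cbn [csum].
    replace (phi (INR 0 + r - INR (S j))) with (phi (INR L + r - INR j))
      by (rewrite <- (Hp (INR 0 + r - INR (S j))); f_equal; rewrite !S_INR; simpl; ring).
    rewrite Cplus_comm. f_equal.
    apply csum_ext. intros i _. f_equal. rewrite !S_INR. ring.
Qed.

Definition phik_bar (k : Z * Z * Z) (g : SE2) : C := Cconj (phik k g).

Lemma cexpi_add a b : cexpi (a + b) = Cmult (cexpi a) (cexpi b).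
Proof.
  unfold cexpi, Cmult. simpl. rewrite cos_plus, sin_plus.
  apply injective_projections; simpl; ring.
Qed.

Lemma Cmod_cexpi a : Cmod (cexpi a) = 1.
Proof.
  unfold cexpi, Cmod. simpl fst; simpl snd.
  pose proof (sin2_cos2 a) as E. unfold Rsqr in E.
  replace (cos a ^ 2 + sin a ^ 2) with 1 by nra. apply sqrt_1.
Qed.

Lemma periodic_2PI_Z {A : Type} (p : R -> A) :
  (forall t, p (t + 2 * PI) = p t) -> forall t (z : Z), p (t + 2 * PI * IZR z) = p t.
Proof.
  intros Hp.
  assert (Hn : forall t (n : nat), p (t + 2 * PI * INR n) = p t).
  { intros t n. induction n.
    - f_equal. simpl. ring.
    - rewrite <- IHn, <- (Hp (t + 2 * PI * INR n)). f_equal. rewrite S_INR. ring. }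
  intros t z. destruct (Z.le_gt_cases 0 z) as [Hz|Hz].
  - rewrite <- (Z2Nat.id z Hz), <- INR_IZR_INZ. apply Hn.
  - rewrite <- (Hn (t + 2 * PI * IZR z) (Z.to_nat (- z))). f_equal.
    rewrite INR_IZR_INZ, Z2Nat.id, opp_IZR by lia. ring.
Qed.

Lemma cexpi_periodic a (z : Z) : cexpi (a + 2 * PI * IZR z) = cexpi a.
Proof.
  apply periodic_2PI_Z. intros t. unfold cexpi.
  replace (t + 2 * PI) with (t + 2 * INR 1 * PI) by (simpl; ring).
  rewrite cos_period, sin_period. reflexivity.
Qed.

Lemma phik_bar_add k x1 y1 t1 x2 y2 t2 :
  phik_bar k (x1 + x2, y1 + y2, t1 + t2) =
  Cmult (phik_bar k (x1, y1, t1)) (phik_bar k (x2, y2, t2)).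
Proof.
  unfold phik_bar, phik, px, py, pt; cbn [fst snd].
  replace (2 * PI * (IZR (fst (fst k)) * (x1 + x2) + IZR (snd (fst k)) * (y1 + y2)))
    with (2 * PI * (IZR (fst (fst k)) * x1 + IZR (snd (fst k)) * y1) +
          2 * PI * (IZR (fst (fst k)) * x2 + IZR (snd (fst k)) * y2)) by ring.
  replace (IZR (snd k) * (t1 + t2)) with (IZR (snd k) * t1 + IZR (snd k) * t2) by ring.
  rewrite !cexpi_add, !Cmult_conj. ring.
Qed.

Lemma Cmod_phik_bar k g : Cmod (phik_bar k g) = 1.
Proof. unfold phik_bar, phik. rewrite Cmod_conj, Cmod_mult, !Cmod_cexpi. ring. Qed.

Lemma phik_bar_periodic_x k x y t (z : Z) : phik_bar k (x + IZR z, y, t) = phik_bar k (x, y, t).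
Proof.
  unfold phik_bar, phik, px, py, pt; cbn [fst snd]. do 2 f_equal.
  match goal with |- cexpi ?a = cexpi ?b =>
    replace a with (b + 2 * PI * IZR (fst (fst k) * z)) by (rewrite mult_IZR; ring) end.
  apply cexpi_periodic.
Qed.

Lemma phik_bar_periodic_y k x y t (z : Z) : phik_bar k (x, y + IZR z, t) = phik_bar k (x, y, t).
Proof.
  unfold phik_bar, phik, px, py, pt; cbn [fst snd]. do 2 f_equal.
  match goal with |- cexpi ?a = cexpi ?b =>
    replace a with (b + 2 * PI * IZR (snd (fst k) * z)) by (rewrite mult_IZR; ring) end.
  apply cexpi_periodic.
Qed.

Lemma phik_bar_periodic_t k x y t : phik_bar k (x, y, t + 2 * PI) = phik_bar k (x, y, t).
Proof.
  unfold phik_bar, phik, px, py, pt; cbn [fst snd]. do 2 f_equal.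
  match goal with |- cexpi ?a = cexpi ?b =>
    replace a with (b + 2 * PI * IZR (snd k)) by ring end.
  apply cexpi_periodic.
Qed.

Definition lipschitz (g : R -> C) (M : R) : Prop :=
  forall x y, Cmod (Cminus (g y) (g x)) <= M * Rabs (y - x).

Lemma lipschitz_nonneg g M : lipschitz g M -> 0 <= M.
Proof.
  intros H. specialize (H 0 1). pose proof (Cmod_ge_0 (Cminus (g 1) (g 0))).
  rewrite Rabs_right in H by lra. lra.
Qed.

Lemma lipschitz_le g M M' : lipschitz g M -> M <= M' -> lipschitz g M'.
Proof.
  intros H HM x y. eapply Rle_trans; [apply H|].
  apply Rmult_le_compat_r; [apply Rabs_pos | exact HM].
Qed.

Lemma lipschitz_continuous g M : lipschitz g M -> forall x, continuous g x.
Proof.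
  intros H x. apply filterlim_locally. intros eps.
  assert (HM : 0 < Rabs M + 1) by (pose proof (Rabs_pos M); lra).
  assert (Hd : 0 < eps / (Rabs M + 1)) by (apply Rdiv_lt_0_compat; [apply cond_pos|lra]).
  exists (mkposreal _ Hd). intros y Hy. apply (@norm_compat1 R_AbsRing C_R_NormedModule).
  rewrite <- Cmod_norm. change (Rabs (y - x) < eps / (Rabs M + 1)) in Hy.
  change (Cmod (Cminus (g y) (g x)) < eps).
  eapply Rle_lt_trans. apply H.
  pose proof (Rabs_pos (y - x)). pose proof (Rle_abs M). pose proof (cond_pos eps).
  apply Rle_lt_trans with ((Rabs M + 1) * Rabs (y - x)). nra.
  replace (pos eps) with ((Rabs M + 1) * (eps / (Rabs M + 1))) by (field; lra).
  apply Rmult_lt_compat_l; lra.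
Qed.

Lemma lipschitz_ex_RInt g M a b :
  lipschitz g M -> @ex_RInt C_R_CompleteNormedModule g a b.
Proof. intros H. apply ex_RInt_continuous. intros. apply (lipschitz_continuous g M H). Qed.

Lemma lipschitz_mulr (p : R -> C) (c : C) M :
  Cmod c = 1 -> lipschitz p M -> lipschitz (fun x => Cmult (p x) c) M.
Proof.
  intros Hc Hp x y.
  replace (Cminus (Cmult (p y) c) (Cmult (p x) c)) with (Cmult (Cminus (p y) (p x)) c) by ring.
  rewrite Cmod_mult, Hc, Rmult_1_r. apply Hp.
Qed.

Lemma mean_value_bound (f df : R -> C) a b M :
  (forall x, @is_derive R_AbsRing C_R_NormedModule f x (df x)) ->
  (forall x, continuous df x) ->
  (forall x, Rmin a b <= x <= Rmax a b -> Cmod (df x) <= M) ->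
  Cmod (Cminus (f b) (f a)) <= M * Rabs (b - a).
Proof.
  intros Hd Hc HM.
  assert (Hle : forall a b, a <= b -> (forall x, a <= x <= b -> Cmod (df x) <= M) ->
            Cmod (Cminus (f b) (f a)) <= M * Rabs (b - a)).
  { clear a b HM. intros a b Hab HM.
    pose proof (@is_RInt_derive C_R_CompleteNormedModule f df a b
                 (fun x _ => Hd x) (fun x _ => Hc x)) as HI.
    rewrite Rabs_right, Cmod_norm, Rmult_comm by lra.
    apply (norm_RInt_le_const df a b (minus (f b) (f a)) M Hab); [|exact HI].
    intros x Hx. rewrite <- Cmod_norm. apply HM. auto. }
  destruct (Rle_dec a b).
  - apply Hle; auto. intros; apply HM. rewrite Rmin_left, Rmax_right; lra.
  - rewrite <- Cmod_opp, Rabs_minus_sym.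
    replace (Copp (Cminus (f b) (f a))) with (Cminus (f a) (f b)) by ring.
    apply Hle; [lra|]. intros; apply HM. rewrite Rmin_right, Rmax_left; lra.
Qed.

Lemma continuous_slice (F : SE2 -> C) (e : R -> SE2) s :
  (forall (eps : posreal) s', ball s eps s' -> ball (e s) eps (e s')) ->
  continuous F (e s) -> continuous (fun s => F (e s)) s.
Proof.
  intros He HF. apply (filterlim_comp _ _ _ e F _ (locally (e s))); auto.
  apply filterlim_locally. intros eps. exists eps. apply He.
Qed.

Definition tuple3 (p : Compactness.Tn 3 R) : SE2 :=
  (fst p, fst (snd p), fst (snd (snd p))).

Lemma fold_Rmax_ge {T : Type} (l : list T) (h : T -> R) t :
  List.In t l -> h t <= List.fold_right Rmax 0 (List.map h l).
Proof.
  induction l; simpl; [tauto|]. intros [->|Hi].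
  - apply Rmax_l.
  - eapply Rle_trans. apply IHl; auto. apply Rmax_r.
Qed.

Lemma fold_Rmax_nonneg {T : Type} (l : list T) (h : T -> R) :
  0 <= List.fold_right Rmax 0 (List.map h l).
Proof. induction l; simpl. lra. eapply Rle_trans. apply IHl. apply Rmax_r. Qed.

Lemma ball_C_Cmod (z w : C) e : ball z e w -> Cmod (Cminus w z) < 2 * e.
Proof.
  intros [H1 H2]. destruct z, w. unfold Cmod. cbn in *.
  unfold AbsRing_ball, abs, minus, plus, opp in H1, H2; simpl in H1, H2.
  apply Rle_lt_trans with (Rabs (r1 + - r) + Rabs (r2 + - r0)); [|lra].
  pose proof (Rabs_pos (r1 + - r)); pose proof (Rabs_pos (r2 + - r0)).
  rewrite <- (sqrt_square (Rabs (r1 + - r) + Rabs (r2 + - r0))) by lra.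
  apply sqrt_le_1_alt. pose proof (Rsqr_abs (r1 + - r)); pose proof (Rsqr_abs (r2 + - r0)).
  unfold Rsqr in *. nra.
Qed.

(* Heine-Borel, via Coquelicot's gauge-compactness of boxes. *)
Lemma bounded_on_box (F : SE2 -> C) a1 b1 a2 b2 a3 b3 :
  (forall p, continuous F p) ->
  exists M, 0 <= M /\ forall x y t, a1 <= x <= b1 -> a2 <= y <= b2 -> a3 <= t <= b3 ->
     Cmod (F (x, y, t)) <= M.
Proof.
  intros Hc.
  assert (Hd : forall p : Compactness.Tn 3 R, exists d : posreal, forall q,
     Compactness.close_n 3 d q p -> Cmod (Cminus (F (tuple3 q)) (F (tuple3 p))) < 2).
  { intros p. specialize (Hc (tuple3 p)).
    apply filterlim_locally with (eps := mkposreal 1 Rlt_0_1) in Hc.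
    destruct Hc as [d Hd]. exists d. intros q Hq.
    destruct p as [p1 [p2 [p3 []]]]. destruct q as [q1 [q2 [q3 []]]].
    simpl in Hq. destruct Hq as [H1 [H2 [H3 _]]].
    replace 2 with (2 * 1) by ring. apply ball_C_Cmod. apply Hd.
    unfold tuple3; simpl. repeat split; assumption. }
  set (delta := fun p => proj1_sig (constructive_indefinite_description _ (Hd p))).
  apply NNPP. intros Hn.
  apply (Compactness.compactness_list 3 (a1, (a2, (a3, tt))) (b1, (b2, (b3, tt))) delta).
  intros [l Hl]. apply Hn.
  set (h := fun p => Cmod (F (tuple3 p))).
  exists (2 + List.fold_right Rmax 0 (List.map h l)).
  split; [pose proof (fold_Rmax_nonneg l h); lra|].
  intros x y t Hx Hy Ht.
  destruct (Hl (x, (y, (t, tt)))) as [p [Hin [_ Hcl]]]; [simpl; tauto|].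
  pose proof (proj2_sig (constructive_indefinite_description _ (Hd p)) (x, (y, (t, tt))) Hcl) as Hq.
  pose proof (fold_Rmax_ge l h p Hin) as Hp. change (h p) with (Cmod (F (tuple3 p))) in Hp.
  change (F (x, y, t)) with (F (tuple3 (x, (y, (t, tt))))).
  replace (F (tuple3 (x, (y, (t, tt))))) with
    (Cplus (Cminus (F (tuple3 (x, (y, (t, tt))))) (F (tuple3 p))) (F (tuple3 p))) by ring.
  eapply Rle_trans. apply Cmod_triangle. lra.
Qed.

Definition vanishes_off_square (f : SE2 -> C) : Prop :=
  forall x y t, / 4 < Rabs x \/ / 4 < Rabs y -> f (x, y, t) = RtoC 0.

Definition lip_bounded (f : SE2 -> C) (M : R) : Prop :=
  0 <= M /\
  (forall y t, lipschitz (fun x => f (x, y, t)) M) /\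
  (forall x t, lipschitz (fun y => f (x, y, t)) M) /\
  (forall x y, lipschitz (fun t => f (x, y, t)) M) /\
  (forall g, Cmod (f g) <= M).

Lemma reduce_mod_2PI (t : R) : exists (z : Z) t0, 0 <= t0 <= 2 * PI /\ t = t0 + 2 * PI * IZR z.
Proof.
  pose proof PI_RGT_0 as HP.
  destruct (archimed (t / (2 * PI))) as [H1 H2].
  exists (up (t / (2 * PI)) - 1)%Z, (t - 2 * PI * IZR (up (t / (2 * PI)) - 1)).
  rewrite minus_IZR. split; [|ring].
  assert (E : t = 2 * PI * (t / (2 * PI))) by (field; lra).
  set (r := t / (2 * PI)) in *. set (u := IZR (up r)) in *.
  split; nra.
Qed.

Definition clamp (x : R) : R := Rmax (- / 2) (Rmin (/ 2) x).

Lemma clamp_lipschitz x x' : Rabs (clamp x' - clamp x) <= Rabs (x' - x).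
Proof.
  unfold clamp, Rmax, Rmin.
  repeat destruct Rle_dec; unfold Rabs; repeat destruct Rcase_abs; lra.
Qed.

Lemma clamp_range x : - / 2 <= clamp x <= / 2.
Proof. unfold clamp, Rmax, Rmin. repeat destruct Rle_dec; lra. Qed.

Lemma clamp_supported (g : R -> C) :
  (forall x, / 4 < Rabs x -> g x = RtoC 0) -> forall x, g x = g (clamp x).
Proof.
  intros Hv x. unfold clamp, Rmax, Rmin.
  repeat destruct Rle_dec; try (f_equal; lra);
    rewrite !Hv; auto; unfold Rabs; repeat destruct Rcase_abs; lra.
Qed.

(* Clamping to [-1/2, 1/2] moves no point of the support, so only the derivative
   on [-1/2, 1/2] matters. *)
Lemma lipschitz_of_derive_supported (g dg : R -> C) M :
  (forall x, @is_derive R_AbsRing C_R_NormedModule g x (dg x)) ->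
  (forall x, continuous dg x) ->
  (forall x, - / 2 <= x <= / 2 -> Cmod (dg x) <= M) -> 0 <= M ->
  (forall x, / 4 < Rabs x -> g x = RtoC 0) -> lipschitz g M.
Proof.
  intros Hd Hc HM M0 Hv x x'. rewrite (clamp_supported g Hv x), (clamp_supported g Hv x').
  eapply Rle_trans.
  - apply (mean_value_bound g dg); auto. intros s Hs. apply HM.
    pose proof (clamp_range x); pose proof (clamp_range x').
    unfold Rmin, Rmax in Hs; repeat destruct Rle_dec in Hs; lra.
  - apply Rmult_le_compat_l; auto. apply clamp_lipschitz.
Qed.

Section C1Vanishing.

Variables f fx fy ft : SE2 -> C.
Hypothesis f_periodic : forall x y t, f (x, y, t + 2 * PI) = f (x, y, t).
Hypothesis f_dx : forall x y t, @is_derive R_AbsRing C_R_NormedModule (fun s => f (s, y, t)) x (fx (x, y, t)).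
Hypothesis f_dy : forall x y t, @is_derive R_AbsRing C_R_NormedModule (fun s => f (x, s, t)) y (fy (x, y, t)).
Hypothesis f_dt : forall x y t, @is_derive R_AbsRing C_R_NormedModule (fun s => f (x, y, s)) t (ft (x, y, t)).
Hypothesis fx_cont : forall g, continuous fx g.
Hypothesis fy_cont : forall g, continuous fy g.
Hypothesis ft_cont : forall g, continuous ft g.
Hypothesis f_vanishes : vanishes_off_square f.

Let f_periodic_Z x y t (z : Z) : f (x, y, t + 2 * PI * IZR z) = f (x, y, t).
Proof. apply (periodic_2PI_Z (fun t => f (x, y, t))). auto. Qed.

Let f_clamp_x x y t : f (x, y, t) = f (clamp x, y, t).
Proof. apply (clamp_supported (fun s => f (s, y, t))). intros; apply f_vanishes; auto. Qed.

Let f_clamp_y x y t : f (x, y, t) = f (x, clamp y, t).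
Proof. apply (clamp_supported (fun s => f (x, s, t))). intros; apply f_vanishes; auto. Qed.

Lemma C1_lipschitz_x : exists Mx, 0 <= Mx /\ forall y t, lipschitz (fun x => f (x, y, t)) Mx.
Proof.
  destruct (bounded_on_box fx (-/2) (/2) (-/2) (/2) 0 (2*PI) fx_cont) as [Mx [Mx0 HMx]].
  exists Mx. split; auto. intros y t.
  destruct (reduce_mod_2PI t) as [z [t0 [Ht0 ->]]].
  intros x x'. rewrite !f_periodic_Z, (f_clamp_y x), (f_clamp_y x').
  apply (lipschitz_of_derive_supported (fun s => f (s, clamp y, t0)) (fun s => fx (s, clamp y, t0)));
    auto.
  - intros s. apply continuous_slice with (e := fun s => (s, clamp y, t0)); [|apply fx_cont].
    intros eps s' H. repeat split; auto; apply ball_center.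
  - intros s Hs. pose proof (clamp_range y). apply HMx; lra.
Qed.

Lemma C1_lipschitz_y : exists My, 0 <= My /\ forall x t, lipschitz (fun y => f (x, y, t)) My.
Proof.
  destruct (bounded_on_box fy (-/2) (/2) (-/2) (/2) 0 (2*PI) fy_cont) as [My [My0 HMy]].
  exists My. split; auto. intros x t.
  destruct (reduce_mod_2PI t) as [z [t0 [Ht0 ->]]].
  intros y y'. rewrite !f_periodic_Z, (f_clamp_x x y), (f_clamp_x x y').
  apply (lipschitz_of_derive_supported (fun s => f (clamp x, s, t0)) (fun s => fy (clamp x, s, t0)));
    auto.
  - intros s. apply continuous_slice with (e := fun s => (clamp x, s, t0)); [|apply fy_cont].
    intros eps s' H. repeat split; auto; apply ball_center.
  - intros s Hs. pose proof (clamp_range x). apply HMy; lra.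
Qed.

Lemma C1_bounded Mx : 0 <= Mx -> (forall y t, lipschitz (fun x => f (x, y, t)) Mx) ->
  forall g, Cmod (f g) <= 2 * Mx.
Proof.
  intros Mx0 Lx [[x y] t]. destruct (Rle_dec (Rabs x) (/4)) as [Hx|Hx].
  - replace (f (x, y, t)) with (Cminus (f (x, y, t)) (f (-1, y, t)))
      by (rewrite (f_vanishes (-1)) by (left; rewrite Rabs_left; lra); ring).
    eapply Rle_trans. apply (Lx y t (-1) x).
    apply Rle_trans with (Mx * 2); [|lra]. apply Rmult_le_compat_l; auto.
    unfold Rabs in *; repeat destruct Rcase_abs; lra.
  - rewrite f_vanishes by (left; lra). rewrite Cmod_0. lra.
Qed.

(* Far apart points are handled by the bound [B], near ones by the derivative on a
   period and a half. *)
Lemma C1_lipschitz_t B : 0 <= B -> (forall g, Cmod (f g) <= B) ->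
  exists Mt, 0 <= Mt /\ forall x y, lipschitz (fun t => f (x, y, t)) Mt.
Proof.
  intros B0 HB. pose proof PI_RGT_0 as HPI.
  destruct (bounded_on_box ft (-/2) (/2) (-/2) (/2) (-(2*PI)) (4*PI) ft_cont) as [Mt [Mt0 HMt]].
  assert (HB' : 0 <= 2 * B / (2 * PI)) by (apply Rdiv_le_0_compat; lra).
  exists (Mt + 2 * B / (2 * PI)). split; [lra|]. intros x y t t'. cbv beta.
  destruct (Rle_dec (2 * PI) (Rabs (t' - t))) as [Hb|Hb].
  - eapply Rle_trans. apply Cmod_triangle. rewrite Cmod_opp.
    pose proof (HB (x, y, t)); pose proof (HB (x, y, t')).
    assert (2 * B <= 2 * B / (2 * PI) * Rabs (t' - t)).
    { replace (2 * B / (2 * PI) * Rabs (t' - t)) with (2 * B * (Rabs (t' - t) / (2 * PI)))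
        by (field; lra).
      rewrite <- (Rmult_1_r (2 * B)) at 1. apply Rmult_le_compat_l; [lra|].
      apply (Rmult_le_reg_r (2 * PI)); [lra|]. unfold Rdiv.
      rewrite Rmult_assoc, Rinv_l by lra. lra. }
    assert (0 <= Mt * Rabs (t' - t)) by (apply Rmult_le_pos; auto using Rabs_pos).
    nra.
  - set (d := t' - t) in *. replace t' with (t + d) by (unfold d; ring). clearbody d.
    destruct (reduce_mod_2PI t) as [z [t0 [Ht0 ->]]].
    replace (t0 + 2 * PI * IZR z + d) with (t0 + d + 2 * PI * IZR z) by ring.
    rewrite !f_periodic_Z, (f_clamp_x x y t0), (f_clamp_x x y (t0 + d)),
      (f_clamp_y (clamp x) y t0), (f_clamp_y (clamp x) y (t0 + d)).
    eapply Rle_trans.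
    + apply (mean_value_bound (fun s => f (clamp x, clamp y, s)) (fun s => ft (clamp x, clamp y, s)) _ _ Mt).
      * intros; apply f_dt.
      * intros s. apply continuous_slice with (e := fun s => (clamp x, clamp y, s)); [|apply ft_cont].
        intros eps s' H. repeat split; auto; apply ball_center.
      * intros s Hs. pose proof (clamp_range x); pose proof (clamp_range y).
        apply HMt; try lra.
        unfold Rabs in Hb; destruct Rcase_abs in Hb;
          unfold Rmin, Rmax in Hs; repeat destruct Rle_dec in Hs; lra.
    + replace (t0 + d - t0) with d by ring.
      apply Rmult_le_compat_r; [apply Rabs_pos | lra].
Qed.

End C1Vanishing.

Lemma C1_vanishing_lip_bounded (f : SE2 -> C) :
  C1_SE2 f -> vanishes_off_square f -> exists M, lip_bounded f M.
Proof.
  intros [Hp [fx [fy [ft [Hdx [Hdy [Hdt [Hcx [Hcy Hct]]]]]]]]] Hv.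
  destruct (C1_lipschitz_x f fx Hp Hdx Hcx Hv) as [Mx [Mx0 Lx]].
  destruct (C1_lipschitz_y f fy Hp Hdy Hcy Hv) as [My [My0 Ly]].
  pose proof (C1_bounded f Hv Mx Mx0 Lx) as B.
  destruct (C1_lipschitz_t f ft Hp Hdt Hct Hv (2 * Mx) ltac:(lra) B) as [Mt [Mt0 Lt]].
  exists (Mx + My + Mt + 2 * Mx). repeat split.
  - lra.
  - intros. eapply lipschitz_le; [apply Lx | lra].
  - intros. eapply lipschitz_le; [apply Ly | lra].
  - intros. eapply lipschitz_le; [apply Lt | lra].
  - intros g. eapply Rle_trans; [apply B | lra].
Qed.

Lemma supported_in_Dop_Dcl f a : supported_in f (Dop a) -> supported_in f (Dcl a).
Proof. intros H g Hg. apply H. intros Hd. apply Hg. unfold Dcl, Dop in *. lra. Qed.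

Lemma supported_in_Dcl_vanishes f : supported_in f (Dcl (/4)) -> vanishes_off_square f.
Proof.
  intros Hs x y t Hxy. refine (locally_singleton _ _ (Hs (x, y, t) _)).
  unfold Dcl, px, py; cbn [fst snd].
  assert (Hx : Rabs x <= sqrt (x ^ 2 + y ^ 2))
    by (rewrite <- sqrt_Rsqr_abs; apply sqrt_le_1_alt; unfold Rsqr; nra).
  assert (Hy : Rabs y <= sqrt (x ^ 2 + y ^ 2))
    by (rewrite <- sqrt_Rsqr_abs; apply sqrt_le_1_alt; unfold Rsqr; nra).
  lra.
Qed.

Lemma round_half (x : R) : exists m : Z, - / 2 <= x - IZR m < / 2.
Proof.
  destruct (archimed (x + / 2)) as [H1 H2].
  exists (up (x + / 2) - 1)%Z. rewrite minus_IZR. simpl. lra.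
Qed.

(* [g] is the 1-periodization of [p]; since [p] lives in [-1/4, 1/4], points at distance
   at least 1/4 are handled by the bound [B], nearer ones lie in one period or both
   outside the support. *)
Lemma periodization_lipschitz (g p : R -> C) M B :
  (forall x (m : Z), Rabs (x - IZR m) <= / 2 -> g x = p (x - IZR m)) ->
  lipschitz p M -> (forall u, / 4 < Rabs u -> p u = RtoC 0) ->
  (forall u, Cmod (p u) <= B) ->
  lipschitz g (M + 8 * B).
Proof.
  intros Hg Hl Hz HB x x'.
  assert (B0 : 0 <= B) by (eapply Rle_trans; [apply Cmod_ge_0|apply (HB 0)]).
  pose proof (lipschitz_nonneg _ _ Hl) as M0.
  assert (Hzero : Cmod (Cminus (RtoC 0) (RtoC 0)) <= (M + 8 * B) * Rabs (x' - x)).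
  { replace (Cminus (RtoC 0) (RtoC 0)) with (RtoC 0) by ring. rewrite Cmod_0.
    apply Rmult_le_pos; [lra|apply Rabs_pos]. }
  destruct (round_half x) as [m Hm].
  destruct (Rle_dec (/ 4) (Rabs (x' - x))) as [Hb|Hb].
  - eapply Rle_trans. apply Cmod_triangle. rewrite Cmod_opp.
    destruct (round_half x') as [m' Hm'].
    rewrite (Hg x m), (Hg x' m') by (unfold Rabs; destruct Rcase_abs; lra).
    pose proof (HB (x' - IZR m')). pose proof (HB (x - IZR m)).
    pose proof (Rabs_pos (x' - x)). nra.
  - rewrite (Hg x m) by (unfold Rabs; destruct Rcase_abs; lra).
    destruct (Rle_dec (Rabs (x' - IZR m)) (/ 2)) as [H1|H1].
    + rewrite (Hg x' m) by auto.
      eapply Rle_trans; [apply Hl|]. replace (x' - IZR m - (x - IZR m)) with (x' - x) by ring.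
      apply Rmult_le_compat_r; [apply Rabs_pos|lra].
    + assert (Hc : x' - IZR m > / 2 \/ x' - IZR m < - / 2)
        by (unfold Rabs in H1; destruct Rcase_abs in H1; lra).
      destruct Hc as [Hc|Hc]; [rewrite (Hg x' (m + 1)%Z) | rewrite (Hg x' (m - 1)%Z)];
        rewrite ?plus_IZR, ?minus_IZR in *; simpl in *;
        try (unfold Rabs in *; repeat destruct Rcase_abs; lra);
        rewrite !Hz by (unfold Rabs in *; repeat destruct Rcase_abs; lra); exact Hzero.
Qed.

Lemma psiOmega_in psi x y t : - / 2 <= x < / 2 -> - / 2 <= y < / 2 ->
  psiOmega psi (x, y, t) = psi (x, y, t).
Proof.
  intros Hx Hy. unfold psiOmega, px, py; simpl.
  repeat destruct Rle_dec; repeat destruct Rlt_dec; try lra; reflexivity.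
Qed.

Lemma psiOmega_half_x psi y t : psiOmega psi (/ 2, y, t) = RtoC 0.
Proof.
  unfold psiOmega, px, py; simpl.
  repeat destruct Rle_dec; repeat destruct Rlt_dec; try lra; reflexivity.
Qed.

Lemma psiOmega_half_y psi x t : psiOmega psi (x, / 2, t) = RtoC 0.
Proof.
  unfold psiOmega, px, py; simpl.
  repeat destruct Rle_dec; repeat destruct Rlt_dec; try lra; reflexivity.
Qed.

Section PeriodicLift.

Variable psi : SE2 -> C.
Hypothesis psi_on_X : on_X psi.
Hypothesis psiOmega_vanishes : vanishes_off_square (psiOmega psi).

Let psi_periodic := proj1 psi_on_X.

(* On the closed period the lift agrees with psi_Omega: at [x - m = 1/2] psi_Omega is 0
   by definition, and psi equals its value at [-1/2], which lies off the support. *)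
Lemma psi_eq_psiOmega_x x y t (m : Z) : - / 2 <= y < / 2 -> Rabs (x - IZR m) <= / 2 ->
  psi (x, y, t) = psiOmega psi (x - IZR m, y, t).
Proof.
  intros Hy Hm.
  destruct (Rlt_dec (x - IZR m) (/ 2)) as [H|H].
  - rewrite psiOmega_in by (unfold Rabs in Hm; destruct Rcase_abs in Hm; lra).
    rewrite <- (psi_periodic m 0%Z (x - IZR m) y t). do 3 f_equal; simpl; ring.
  - assert (E : x - IZR m = / 2) by (unfold Rabs in Hm; destruct Rcase_abs in Hm; lra).
    rewrite E, psiOmega_half_x.
    transitivity (psi (- / 2 + IZR (m + 1), y + IZR 0, t)).
    { do 3 f_equal; [rewrite plus_IZR; simpl; lra | simpl; ring]. }
    rewrite psi_periodic, <- psiOmega_in by lra.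
    apply psiOmega_vanishes. left. rewrite Rabs_left; lra.
Qed.

Lemma psi_eq_psiOmega_y x y t (m : Z) : - / 2 <= x < / 2 -> Rabs (y - IZR m) <= / 2 ->
  psi (x, y, t) = psiOmega psi (x, y - IZR m, t).
Proof.
  intros Hx Hm.
  destruct (Rlt_dec (y - IZR m) (/ 2)) as [H|H].
  - rewrite psiOmega_in by (unfold Rabs in Hm; destruct Rcase_abs in Hm; lra).
    rewrite <- (psi_periodic 0%Z m x (y - IZR m) t). do 3 f_equal; simpl; ring.
  - assert (E : y - IZR m = / 2) by (unfold Rabs in Hm; destruct Rcase_abs in Hm; lra).
    rewrite E, psiOmega_half_y.
    transitivity (psi (x + IZR 0, - / 2 + IZR (m + 1), t)).
    { do 3 f_equal; [simpl; ring | rewrite plus_IZR; simpl; lra]. }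
    rewrite psi_periodic, <- psiOmega_in by lra.
    apply psiOmega_vanishes. right. rewrite Rabs_left; lra.
Qed.

Lemma psi_eq_psiOmega_reduced x y : exists x0 y0,
  forall t, psi (x, y, t) = psiOmega psi (x0, y0, t).
Proof.
  destruct (round_half x) as [m Hm]. destruct (round_half y) as [n Hn].
  exists (x - IZR m), (y - IZR n). intros t.
  rewrite psiOmega_in by auto. rewrite <- (psi_periodic m n (x - IZR m) (y - IZR n) t).
  do 3 f_equal; ring.
Qed.

Lemma lift_lip_bounded M : lip_bounded (psiOmega psi) M -> lip_bounded psi (M + 8 * M).
Proof.
  intros [M0 [Lx [Ly [Lt B]]]]. repeat split.
  - lra.
  - intros y t. destruct (round_half y) as [n Hn].
    assert (E : forall s, psi (s, y, t) = psi (s, y - IZR n, t)).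
    { intros s. rewrite <- (psi_periodic 0%Z n s (y - IZR n) t). do 3 f_equal; simpl; ring. }
    intros x x'. rewrite !E.
    apply (periodization_lipschitz (fun s => psi (s, y - IZR n, t))
             (fun s => psiOmega psi (s, y - IZR n, t)) M M).
    + intros s m Hm. apply psi_eq_psiOmega_x; auto.
    + apply Lx.
    + intros; apply psiOmega_vanishes; auto.
    + intros; apply B.
  - intros x t. destruct (round_half x) as [n Hn].
    assert (E : forall s, psi (x, s, t) = psi (x - IZR n, s, t)).
    { intros s. rewrite <- (psi_periodic n 0%Z (x - IZR n) s t). do 3 f_equal; simpl; ring. }
    intros y y'. rewrite !E.
    apply (periodization_lipschitz (fun s => psi (x - IZR n, s, t))
             (fun s => psiOmega psi (x - IZR n, s, t)) M M).
    + intros s m Hm. apply psi_eq_psiOmega_y; auto.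
    + apply Ly.
    + intros; apply psiOmega_vanishes; auto.
    + intros; apply B.
  - intros x y. destruct (psi_eq_psiOmega_reduced x y) as [x0 [y0 E]].
    apply lipschitz_le with M; [|lra]. intros t t'. rewrite !E. apply Lt.
  - intros [[x y] t]. destruct (psi_eq_psiOmega_reduced x y) as [x0 [y0 E]]. rewrite E.
    eapply Rle_trans; [apply B | lra].
Qed.

End PeriodicLift.

Notation CRInt := (@RInt C_R_CompleteNormedModule).

Lemma CRInt_const a b (c : C) : CRInt (fun _ => c) a b = Cmult (RtoC (b - a)) c.
Proof. rewrite RInt_const. apply scal_C. Qed.

Lemma Cmod_CRInt_minus_le (g1 g2 : R -> C) a b M : a <= b ->
  @ex_RInt C_R_CompleteNormedModule g1 a b -> @ex_RInt C_R_CompleteNormedModule g2 a b ->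
  (forall x, a <= x <= b -> Cmod (Cminus (g1 x) (g2 x)) <= M) ->
  Cmod (Cminus (CRInt g1 a b) (CRInt g2 a b)) <= (b - a) * M.
Proof.
  intros Hab H1 H2 HM.
  change (Cminus (CRInt g1 a b) (CRInt g2 a b))
    with (@minus C_R_CompleteNormedModule (CRInt g1 a b) (CRInt g2 a b)).
  rewrite <- (@RInt_minus C_R_CompleteNormedModule g1 g2 a b H1 H2), Cmod_norm.
  apply (norm_RInt_le_const (fun x => minus (g1 x) (g2 x)) a b _ M Hab).
  - intros. rewrite <- Cmod_norm. apply HM; auto.
  - apply (@RInt_correct C_R_CompleteNormedModule), (@ex_RInt_minus C_R_CompleteNormedModule); auto.
Qed.

Lemma CRInt_lipschitz_param (G : R -> R -> C) a b M M' :
  a <= b -> (forall u, lipschitz (G u) M') -> (forall s, lipschitz (fun u => G u s) M) ->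
  lipschitz (fun u => CRInt (G u) a b) ((b - a) * M).
Proof.
  intros Hab HG Hu u u'. rewrite Rmult_assoc.
  apply Cmod_CRInt_minus_le; try (eapply lipschitz_ex_RInt; apply HG); auto.
  intros s _. apply Hu.
Qed.

Lemma CRInt_gen_supported (f : R -> C) a b :
  a <= b -> (forall x, x < a \/ b < x -> f x = RtoC 0) ->
  @ex_RInt C_R_CompleteNormedModule f a b ->
  @RInt_gen C_R_CompleteNormedModule f (Rbar_locally m_infty) (Rbar_locally p_infty)
  = CRInt f a b.
Proof.
  intros Hab Hz Hex. apply is_RInt_gen_unique.
  intros P HP.
  apply Filter_prod with (fun x => x < a) (fun x => b < x); [exists a; auto | exists b; auto|].
  intros u v Hu Hv. exists (CRInt f a b). split; [|apply locally_singleton; auto].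
  assert (H0 : forall c d, c <= d -> (forall x, c < x < d -> f x = RtoC 0) ->
            @is_RInt C_R_NormedModule f c d zero).
  { intros c d Hcd Hf.
    apply (is_RInt_ext (fun _ => RtoC 0)).
    - intros x Hx. rewrite Rmin_left, Rmax_right in Hx by lra. rewrite Hf by lra. reflexivity.
    - pose proof (@is_RInt_const C_R_NormedModule c d (RtoC 0)) as H.
      rewrite scal_C in H. replace (Cmult (RtoC (d - c)) (RtoC 0)) with (RtoC 0) in H by ring.
      exact H. }
  change (@is_RInt C_R_NormedModule f u v (CRInt f a b)).
  replace (CRInt f a b) with (@plus C_R_NormedModule (@plus C_R_NormedModule zero (CRInt f a b)) zero)
    by (rewrite plus_zero_r, plus_zero_l; reflexivity).
  apply is_RInt_Chasles with b; [apply is_RInt_Chasles with a|].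
  - apply (H0 u a); [lra|]. intros; apply Hz; lra.
  - exact (@RInt_correct C_R_CompleteNormedModule f a b Hex).
  - apply (H0 b v); [lra|]. intros; apply Hz; lra.
Qed.

Lemma riemann_cell_error g M a h x : 0 <= h -> lipschitz g M -> a <= x <= a + h ->
  Cmod (Cminus (CRInt g a (a + h)) (Cmult (RtoC h) (g x))) <= h * (M * h).
Proof.
  intros Hh Hg Hx.
  replace (Cmult (RtoC h) (g x)) with (CRInt (fun _ => g x) a (a + h))
    by (rewrite CRInt_const; do 2 f_equal; ring).
  replace (h * (M * h)) with ((a + h - a) * (M * h)) by ring.
  apply Cmod_CRInt_minus_le; [lra | eapply lipschitz_ex_RInt; eauto | apply ex_RInt_const |].
  intros s Hs. eapply Rle_trans; [apply Hg|].
  apply Rmult_le_compat_l; [eapply lipschitz_nonneg; eauto|].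
  unfold Rabs; destruct Rcase_abs; lra.
Qed.

Lemma riemann_sum_error g M a h n (x : nat -> R) : 0 <= h -> lipschitz g M ->
  (forall j, (j < n)%nat -> a + INR j * h <= x j <= a + INR j * h + h) ->
  Cmod (Cminus (CRInt g a (a + INR n * h)) (Cmult (RtoC h) (csum n (fun j => g (x j)))))
  <= INR n * h * (M * h).
Proof.
  intros Hh Hg Hx. induction n.
  - replace (a + INR 0 * h) with a by (simpl; ring). rewrite RInt_point.
    cbn [csum]. match goal with |- Cmod ?z <= _ =>
      replace z with (RtoC 0) by (apply injective_projections; cbn; ring) end.
    rewrite Cmod_0. simpl. lra.
  - replace (a + INR (S n) * h) with (a + INR n * h + h) by (rewrite S_INR; ring).
    rewrite <- (@RInt_Chasles C_R_CompleteNormedModule g a (a + INR n * h))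
      by (eapply lipschitz_ex_RInt; eauto).
    cbn [csum].
    change (@plus C_R_CompleteNormedModule ?u ?v) with (Cplus u v).
    replace (Cminus (Cplus (CRInt g a (a + INR n * h)) (CRInt g (a + INR n * h) (a + INR n * h + h)))
                    (Cmult (RtoC h) (Cplus (csum n (fun j => g (x j))) (g (x n)))))
      with (Cplus (Cminus (CRInt g a (a + INR n * h)) (Cmult (RtoC h) (csum n (fun j => g (x j)))))
                  (Cminus (CRInt g (a + INR n * h) (a + INR n * h + h)) (Cmult (RtoC h) (g (x n)))))
      by ring.
    eapply Rle_trans; [apply Cmod_triangle|].
    pose proof (riemann_cell_error g M (a + INR n * h) h (x n) Hh Hg (Hx n ltac:(lia))).
    specialize (IHn (fun j Hj => Hx j ltac:(lia))).
    rewrite S_INR. lra.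
Qed.

Lemma csum_rev n F : csum n F = csum n (fun j => F (n - S j)%nat).
Proof.
  induction n; [reflexivity|].
  transitivity (Cplus (csum n F) (F n)); [reflexivity|].
  rewrite csumS, IHn, Cplus_comm. f_equal. f_equal. lia.
Qed.

Lemma riemann_right_error g M b h n : 0 <= h -> lipschitz g M ->
  Cmod (Cminus (CRInt g (b - INR n * h) b) (Cmult (RtoC h) (csum n (fun j => g (b - INR j * h)))))
  <= INR n * h * (M * h).
Proof.
  intros Hh Hg. rewrite csum_rev.
  assert (Htag : forall j, (j < n)%nat ->
    b - INR n * h + INR j * h <= b - INR (n - S j) * h <= b - INR n * h + INR j * h + h).
  { intros j Hj. rewrite minus_INR, S_INR by lia. lra. }
  pose proof (riemann_sum_error g M (b - INR n * h) h n _ Hh Hg Htag) as H.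
  replace (b - INR n * h + INR n * h) with b in H by ring. exact H.
Qed.

Lemma riemann_left_error g M a h n : 0 <= h -> lipschitz g M ->
  Cmod (Cminus (CRInt g a (a + INR n * h)) (Cmult (RtoC h) (csum n (fun j => g (a + INR j * h)))))
  <= INR n * h * (M * h).
Proof. intros Hh Hg. apply riemann_sum_error; auto. intros j _. lra. Qed.

Lemma CRInt_vanishing (f : R -> C) a b :
  (forall x, Rmin a b < x < Rmax a b -> f x = RtoC 0) -> CRInt f a b = RtoC 0.
Proof.
  intros H. rewrite (@RInt_ext C_R_CompleteNormedModule f (fun _ => RtoC 0)) by exact H.
  rewrite CRInt_const. apply injective_projections; simpl; ring.
Qed.

Section IteratedIntegral.

Variables (F : R -> R -> R -> C) (Mu Mv Ms : R).
Hypothesis F_lip_u : forall v s, lipschitz (fun u => F u v s) Mu.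
Hypothesis F_lip_v : forall u s, lipschitz (fun v => F u v s) Mv.
Hypothesis F_lip_s : forall u v, lipschitz (fun s => F u v s) Ms.

Let J u v := CRInt (fun s => F u v s) 0 (2 * PI).

Lemma slice_integral_lipschitz_u v : lipschitz (fun u => J u v) (2 * PI * Mu).
Proof.
  replace (2 * PI * Mu) with ((2 * PI - 0) * Mu) by ring.
  apply (CRInt_lipschitz_param (fun u s => F u v s) 0 (2 * PI) Mu Ms); auto.
  pose proof PI_RGT_0. lra.
Qed.

Lemma slice_integral_lipschitz_v u : lipschitz (fun v => J u v) (2 * PI * Mv).
Proof.
  replace (2 * PI * Mv) with ((2 * PI - 0) * Mv) by ring.
  apply (CRInt_lipschitz_param (fun v s => F u v s) 0 (2 * PI) Mv Ms); auto.
  pose proof PI_RGT_0. lra.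
Qed.

Lemma iterated_integral_lipschitz a b : a <= b ->
  lipschitz (fun u => CRInt (fun v => J u v) a b) ((b - a) * (2 * PI * Mu)).
Proof.
  intros Hab. apply (CRInt_lipschitz_param J a b (2 * PI * Mu) (2 * PI * Mv)); auto.
  - exact slice_integral_lipschitz_v.
  - exact slice_integral_lipschitz_u.
Qed.

Lemma riemann_slab_error u c2 L2 L3 h2 h3 :
  0 <= h2 -> 0 <= h3 -> INR L2 * h2 = 1 -> INR L3 * h3 = 2 * PI ->
  Cmod (Cminus (CRInt (fun v => J u v) (c2 - / 2) (c2 + / 2))
    (Cmult (RtoC h2) (csum L2 (fun j => Cmult (RtoC h3) (csum L3 (fun l =>
       F u (c2 + / 2 - INR j * h2) (INR l * h3)))))))
  <= 2 * PI * (Mv * h2 + Ms * h3).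
Proof.
  intros Hh2 Hh3 E2 E3.
  set (Y := Cmult (RtoC h2) (csum L2 (fun j => J u (c2 + / 2 - INR j * h2)))).
  assert (EY : Cmod (Cminus (CRInt (fun w => J u w) (c2 - / 2) (c2 + / 2)) Y) <= 2 * PI * Mv * h2).
  { pose proof (riemann_right_error (fun w => J u w) _ (c2 + / 2) h2 L2 Hh2
                  (slice_integral_lipschitz_v u)) as H.
    replace (c2 + / 2 - INR L2 * h2) with (c2 - / 2) in H by lra.
    rewrite E2, Rmult_1_l in H. exact H. }
  assert (EZ : Cmod (Cminus Y (Cmult (RtoC h2) (csum L2 (fun j => Cmult (RtoC h3)
                 (csum L3 (fun l => F u (c2 + / 2 - INR j * h2) (INR l * h3)))))))
               <= 2 * PI * Ms * h3).
  { replace (2 * PI * Ms * h3) with (h2 * (INR L2 * (2 * PI * Ms * h3)))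
      by (transitivity ((INR L2 * h2) * (2 * PI * Ms * h3)); [ring | rewrite E2; ring]).
    unfold Y. rewrite Cmult_minus_distr_l. apply Cmod_RtoC_mult_le; auto.
    apply Cmod_csum_minus_le. intros j _.
    pose proof (riemann_left_error (fun s => F u (c2 + / 2 - INR j * h2) s) Ms 0 h3 L3 Hh3 (F_lip_s _ _)) as H.
    rewrite E3, Rplus_0_l in H. replace (2 * PI * Ms * h3) with (2 * PI * (Ms * h3)) by ring.
    eapply Rle_trans; [|exact H]. right. unfold J. do 3 f_equal.
    apply csum_ext. intros l _. f_equal. ring. }
  replace (Cminus (CRInt (fun w => J u w) (c2 - / 2) (c2 + / 2)) _) with
    (Cplus (Cminus (CRInt (fun w => J u w) (c2 - / 2) (c2 + / 2)) Y)
           (Cminus Y (Cmult (RtoC h2) (csum L2 (fun j => Cmult (RtoC h3)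
                 (csum L3 (fun l => F u (c2 + / 2 - INR j * h2) (INR l * h3)))))))) by ring.
  eapply Rle_trans; [apply Cmod_triangle|]. lra.
Qed.

Lemma riemann_box_error c1 c2 L1 L2 L3 h1 h2 h3 :
  0 <= h1 -> 0 <= h2 -> 0 <= h3 ->
  INR L1 * h1 = 1 -> INR L2 * h2 = 1 -> INR L3 * h3 = 2 * PI ->
  Cmod (Cminus
    (CRInt (fun u => CRInt (fun v => CRInt (fun s => F u v s) 0 (2 * PI))
                      (c2 - / 2) (c2 + / 2)) (c1 - / 2) (c1 + / 2))
    (Cmult (RtoC (h1 * h2 * h3))
      (csum L1 (fun i => csum L2 (fun j => csum L3 (fun l =>
         F (c1 + / 2 - INR i * h1) (c2 + / 2 - INR j * h2) (INR l * h3)))))))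
  <= 2 * PI * (Mu * h1 + Mv * h2 + Ms * h3).
Proof.
  intros Hh1 Hh2 Hh3 E1 E2 E3.
  set (I := fun u => CRInt (fun v => J u v) (c2 - / 2) (c2 + / 2)).
  set (u := fun i => c1 + / 2 - INR i * h1).
  set (Z := fun i => Cmult (RtoC h2) (csum L2 (fun j => Cmult (RtoC h3)
              (csum L3 (fun l => F (u i) (c2 + / 2 - INR j * h2) (INR l * h3)))))).
  assert (EX : Cmod (Cminus (CRInt I (c1 - / 2) (c1 + / 2)) (Cmult (RtoC h1) (csum L1 (fun i => I (u i)))))
               <= 2 * PI * Mu * h1).
  { assert (LI : lipschitz I (2 * PI * Mu)).
    { replace (2 * PI * Mu) with ((c2 + / 2 - (c2 - / 2)) * (2 * PI * Mu)) by field.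
      apply iterated_integral_lipschitz. lra. }
    pose proof (riemann_right_error I _ (c1 + / 2) h1 L1 Hh1 LI) as H.
    replace (c1 + / 2 - INR L1 * h1) with (c1 - / 2) in H by lra.
    replace (2 * PI * Mu * h1) with (INR L1 * h1 * (2 * PI * Mu * h1)) by (rewrite E1; ring).
    exact H. }
  assert (EZ : Cmod (Cmult (RtoC h1) (Cminus (csum L1 (fun i => I (u i))) (csum L1 Z)))
               <= 2 * PI * (Mv * h2 + Ms * h3)).
  { replace (2 * PI * (Mv * h2 + Ms * h3)) with (h1 * (INR L1 * (2 * PI * (Mv * h2 + Ms * h3))))
      by (transitivity ((INR L1 * h1) * (2 * PI * (Mv * h2 + Ms * h3))); [ring | rewrite E1; ring]).
    apply Cmod_RtoC_mult_le; auto. apply Cmod_csum_minus_le. intros i _.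
    exact (riemann_slab_error (u i) c2 L2 L3 h2 h3 Hh2 Hh3 E2 E3). }
  replace (Cmult (RtoC (h1 * h2 * h3)) _) with (Cmult (RtoC h1) (csum L1 Z)).
  - change (CRInt (fun u => CRInt (fun v => CRInt (fun s => F u v s) 0 (2 * PI))
              (c2 - / 2) (c2 + / 2)) (c1 - / 2) (c1 + / 2)) with (CRInt I (c1 - / 2) (c1 + / 2)).
    replace (Cminus (CRInt I (c1 - / 2) (c1 + / 2)) (Cmult (RtoC h1) (csum L1 Z))) with
      (Cplus (Cminus (CRInt I (c1 - / 2) (c1 + / 2)) (Cmult (RtoC h1) (csum L1 (fun i => I (u i)))))
             (Cmult (RtoC h1) (Cminus (csum L1 (fun i => I (u i))) (csum L1 Z)))) by ring.
    eapply Rle_trans; [apply Cmod_triangle|]. lra.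
  - unfold Z. rewrite <- !csum_mull. apply csum_ext. intros i _.
    rewrite Cmult_assoc, <- !csum_mull. apply csum_ext. intros j _.
    rewrite Cmult_assoc, <- !csum_mull. apply csum_ext. intros l _.
    unfold u. rewrite !RtoC_mult. ring.
Qed.

Lemma int_SE2_supported (G : SE2 -> C) c1 c2 :
  (forall u v s, G (u, v, s) = F u v s) ->
  (forall u v s, / 4 < Rabs (c1 - u) \/ / 4 < Rabs (c2 - v) -> F u v s = RtoC 0) ->
  int_SE2 G = Cmult (RtoC (/ (2 * PI)))
    (CRInt (fun u => CRInt (fun v => CRInt (fun s => F u v s) 0 (2 * PI))
                      (c2 - / 2) (c2 + / 2)) (c1 - / 2) (c1 + / 2)).
Proof.
  intros HG Hz. pose proof PI_RGT_0 as HPI.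
  replace G with (fun h => F (fst (fst h)) (snd (fst h)) (snd h))
    by (apply functional_extensionality; intros [[u v] s]; auto).
  unfold int_SE2. rewrite scal_C. cbn [fst snd]. f_equal.
  assert (Jz : forall u v, / 4 < Rabs (c1 - u) \/ / 4 < Rabs (c2 - v) -> J u v = RtoC 0).
  { intros u v H. apply CRInt_vanishing. intros; apply Hz; auto. }
  replace (fun u => @RInt_gen C_R_CompleteNormedModule
                      (fun v => CRInt (fun s => F u v s) 0 (2 * PI))
                      (Rbar_locally m_infty) (Rbar_locally p_infty))
    with (fun u => CRInt (fun v => J u v) (c2 - / 2) (c2 + / 2)).
  - apply CRInt_gen_supported; [lra | | ].
    + intros u Hu'. apply CRInt_vanishing.
      intros; apply Jz. left. unfold Rabs; destruct Rcase_abs; lra.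
    + eapply lipschitz_ex_RInt. apply iterated_integral_lipschitz. lra.
  - apply functional_extensionality. intros u. symmetry. apply CRInt_gen_supported; [lra | |].
    + intros v Hv'. apply Jz. right. unfold Rabs; destruct Rcase_abs; lra.
    + eapply lipschitz_ex_RInt. apply slice_integral_lipschitz_v.
Qed.

End IteratedIntegral.

Lemma lipschitz_mult (p q : R -> C) Mp Mq Bp Bq :
  lipschitz p Mp -> lipschitz q Mq ->
  (forall x, Cmod (p x) <= Bp) -> (forall x, Cmod (q x) <= Bq) ->
  lipschitz (fun x => Cmult (p x) (q x)) (Mp * Bq + Bp * Mq).
Proof.
  intros Hp Hq HBp HBq x y.
  replace (Cminus (Cmult (p y) (q y)) (Cmult (p x) (q x)))
    with (Cplus (Cmult (Cminus (p y) (p x)) (q y)) (Cmult (p x) (Cminus (q y) (q x)))) by ring.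
  eapply Rle_trans; [apply Cmod_triangle|]. rewrite !Cmod_mult.
  pose proof (Cmod_ge_0 (Cminus (p y) (p x))); pose proof (Cmod_ge_0 (q y)).
  pose proof (Cmod_ge_0 (p x)); pose proof (Cmod_ge_0 (Cminus (q y) (q x))).
  pose proof (lipschitz_nonneg _ _ Hp). pose proof (Rabs_pos (y - x)).
  apply Rle_trans with (Mp * Rabs (y - x) * Bq + Bp * (Mq * Rabs (y - x))); [|right; ring].
  apply Rplus_le_compat; apply Rmult_le_compat; auto.
Qed.

Lemma lipschitz_reflect (g : R -> C) M c : lipschitz g M -> lipschitz (fun u => g (c - u)) M.
Proof.
  intros H x y. eapply Rle_trans; [apply H|]. right. f_equal.
  rewrite <- Rabs_Ropp. f_equal. ring.
Qed.

Definition conv_integrand (psi rho : SE2 -> C) (c : SE2) (u v s : R) : C :=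
  Cmult (psi (u, v, s)) (rho (px c - u, py c - v, pt c - s)).

Lemma radial_se2_inv_mul rho u v s c : radial rho ->
  rho (se2_inv_mul (u, v, s) c) = rho (px c - u, py c - v, pt c - s).
Proof.
  intros Hr. unfold se2_inv_mul, px, py, pt; cbn [fst snd].
  rewrite <- (Hr _ _ _ s). pose proof (sin2_cos2 s) as E. unfold Rsqr in E.
  do 3 f_equal;
    [transitivity ((fst (fst c) - u) * (sin s * sin s + cos s * cos s))
    |transitivity ((snd (fst c) - v) * (sin s * sin s + cos s * cos s))];
    try ring; rewrite E; ring.
Qed.

(* Sample points [c + 1/2 - i/L]: when [c] lies on the DFT grid, [c - u] runs over
   the DFT grid and [u] over the grid [i/L], which makes the DFT of this sum factorize. *)
Definition conv_riemann (psi rho : SE2 -> C) (L1 L2 L3 : nat) (c : SE2) : C :=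
  Cmult (RtoC (/ (INR L1 * INR L2 * INR L3)))
    (csum L1 (fun i => csum L2 (fun j => csum L3 (fun l =>
       conv_integrand psi rho c (px c + / 2 - INR i * / INR L1) (py c + / 2 - INR j * / INR L2)
         (INR l * (2 * PI / INR L3)))))).

Lemma conv_riemann_error psi rho Mp Mr L1 L2 L3 c :
  lip_bounded psi Mp -> lip_bounded rho Mr -> vanishes_off_square rho -> radial rho ->
  (1 <= L1)%nat -> (1 <= L2)%nat -> (1 <= L3)%nat ->
  Cmod (Cminus (conv psi rho c) (conv_riemann psi rho L1 L2 L3 c))
    <= 2 * Mp * Mr * (/ INR L1 + / INR L2 + 2 * PI / INR L3).
Proof.
  intros [Mp0 [Px [Py [Pt PB]]]] [Mr0 [Rx [Ry [Rt RB]]]] Hv Hr HL1 HL2 HL3.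
  pose proof PI_RGT_0 as HPI.
  assert (HI1 : 0 < INR L1) by (apply lt_0_INR; lia).
  assert (HI2 : 0 < INR L2) by (apply lt_0_INR; lia).
  assert (HI3 : 0 < INR L3) by (apply lt_0_INR; lia).
  destruct c as [[c1 c2] c3].
  set (F := conv_integrand psi rho (c1, c2, c3)).
  set (M := Mp * Mr + Mp * Mr).
  assert (Hu : forall v s, lipschitz (fun u => F u v s) M).
  { intros v s. apply lipschitz_mult; auto.
    apply (lipschitz_reflect (fun u => rho (u, c2 - v, c3 - s))). apply Rx. }
  assert (Hv' : forall u s, lipschitz (fun v => F u v s) M).
  { intros u s. apply lipschitz_mult; auto.
    apply (lipschitz_reflect (fun v => rho (c1 - u, v, c3 - s))). apply Ry. }
  assert (Hs : forall u v, lipschitz (fun s => F u v s) M).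
  { intros u v. apply lipschitz_mult; auto.
    apply (lipschitz_reflect (fun s => rho (c1 - u, c2 - v, s))). apply Rt. }
  assert (Hz : forall u v s, / 4 < Rabs (c1 - u) \/ / 4 < Rabs (c2 - v) -> F u v s = RtoC 0).
  { intros u v s H. unfold F, conv_integrand, px, py, pt; cbn [fst snd].
    rewrite Hv by auto. ring. }
  unfold conv. rewrite (int_SE2_supported F M M M Hu Hv' Hs _ c1 c2); auto.
  2:{ intros u v s. unfold F, conv_integrand. rewrite radial_se2_inv_mul; auto. }
  pose proof (riemann_box_error F M M M Hu Hv' Hs c1 c2 L1 L2 L3
                (/ INR L1) (/ INR L2) (2 * PI / INR L3)) as H.
  unfold conv_riemann, px, py, pt. cbn [fst snd]. fold F.
  replace (RtoC (/ (INR L1 * INR L2 * INR L3)))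
    with (Cmult (RtoC (/ (2 * PI))) (RtoC (/ INR L1 * / INR L2 * (2 * PI / INR L3))))
    by (rewrite <- RtoC_mult; f_equal; field; repeat split; lra).
  rewrite <- Cmult_assoc, Cmult_minus_distr_l.
  apply Rle_trans with (/ (2 * PI) * (2 * PI * (M * / INR L1 + M * / INR L2 + M * (2 * PI / INR L3)))).
  - apply Cmod_RtoC_mult_le; [apply Rlt_le, Rinv_0_lt_compat; lra|].
    apply H; auto; try (apply Rlt_le, Rinv_0_lt_compat; lra);
      try (apply Rdiv_le_0_compat; lra); field; lra.
  - right. unfold M. field. repeat split; lra.
Qed.

Definition grid_x (L i : nat) : R := - / 2 + INR i / INR L.
Definition grid_t (L l : nat) : R := 2 * PI * INR l / INR L.

Lemma dft_csum f k L1 L2 L3 :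
  dft f k (L1, L2, L3) = Cmult (RtoC (/ (INR L1 * INR L2 * INR L3)))
    (csum L1 (fun i => csum L2 (fun j => csum L3 (fun l =>
       Cmult (f (grid_x L1 i, grid_x L2 j, grid_t L3 l))
             (phik_bar k (grid_x L1 i, grid_x L2 j, grid_t L3 l)))))).
Proof.
  unfold dft. cbn [fst snd]. rewrite scal_C. f_equal.
  rewrite sum_n_m_csum. apply csum_ext; intros i _.
  rewrite sum_n_m_csum. apply csum_ext; intros j _.
  rewrite sum_n_m_csum. apply csum_ext; intros l _.
  unfold grid_x, grid_t, phik_bar. rewrite !Nat.sub_succ, !Nat.sub_0_r. reflexivity.
Qed.

Definition dft0 (f : SE2 -> C) k L1 L2 L3 : C :=
  Cmult (RtoC (/ (INR L1 * INR L2 * INR L3)))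
    (csum L1 (fun i => csum L2 (fun j => csum L3 (fun l =>
       Cmult (f (INR i * / INR L1, INR j * / INR L2, grid_t L3 l))
             (phik_bar k (INR i * / INR L1, INR j * / INR L2, grid_t L3 l)))))).

Lemma Cmod_dft_le f k L1 L2 L3 B :
  (1 <= L1)%nat -> (1 <= L2)%nat -> (1 <= L3)%nat ->
  (forall c, Cmod (f c) <= B) -> Cmod (dft f k (L1, L2, L3)) <= B.
Proof.
  intros HL1 HL2 HL3 H. rewrite dft_csum.
  assert (HI1 : 0 < INR L1) by (apply lt_0_INR; lia).
  assert (HI2 : 0 < INR L2) by (apply lt_0_INR; lia).
  assert (HI3 : 0 < INR L3) by (apply lt_0_INR; lia).
  assert (HN : 0 < INR L1 * INR L2 * INR L3) by (repeat apply Rmult_lt_0_compat; lra).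
  apply Rle_trans with (/ (INR L1 * INR L2 * INR L3) * (INR L1 * (INR L2 * (INR L3 * B)))).
  - apply Cmod_RtoC_mult_le; [apply Rlt_le, Rinv_0_lt_compat; lra|].
    apply Cmod_csum_le; intros; apply Cmod_csum_le; intros; apply Cmod_csum_le; intros.
    rewrite Cmod_mult, Cmod_phik_bar, Rmult_1_r. apply H.
  - right. field. repeat split; lra.
Qed.

Lemma dft_minus f g k L :
  Cminus (dft f k L) (dft g k L) = dft (fun c => Cminus (f c) (g c)) k L.
Proof.
  destruct L as [[L1 L2] L3]. rewrite !dft_csum.
  rewrite Cmult_minus_distr_l.
  f_equal. rewrite <- csum_minus. apply csum_ext; intros. rewrite <- csum_minus. apply csum_ext; intros.
  rewrite <- csum_minus. apply csum_ext; intros. ring.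
Qed.

Lemma csum_shift_periodic_scaled L h (phi : R -> C) i : (1 <= L)%nat ->
  (forall x, phi (x + INR L * h) = phi x) ->
  csum L (fun a => phi ((INR a - INR i) * h)) = csum L (fun a => phi (INR a * h)).
Proof.
  intros HL Hp.
  pose proof (csum_shift_periodic L (fun r => phi (r * h)) 0 i HL) as H. cbv beta in H.
  transitivity (csum L (fun a => phi ((INR a + 0 - INR i) * h))).
  { apply csum_ext; intros; f_equal; ring. }
  rewrite H.
  - apply csum_ext; intros; f_equal; ring.
  - intros x. rewrite <- (Hp (x * h)). f_equal. ring.
Qed.

(* Discrete convolution theorem on the periodic grid [Z/L1 x Z/L2 x Z/L3]. *)
Lemma csum_convolution (P Q : R -> R -> R -> C) (X Y : nat -> R) L1 L2 L3 h1 h2 h3 :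
  (1 <= L1)%nat -> (1 <= L2)%nat -> (1 <= L3)%nat ->
  (forall x y t, P (x + INR L1 * h1) y t = P x y t) ->
  (forall x y t, P x (y + INR L2 * h2) t = P x y t) ->
  (forall x y t, Q x y (t + INR L3 * h3) = Q x y t) ->
  csum L1 (fun a1 => csum L2 (fun a2 => csum L3 (fun a3 =>
    csum L1 (fun i => csum L2 (fun j => csum L3 (fun l =>
      Cmult (P ((INR a1 - INR i) * h1) ((INR a2 - INR j) * h2) (INR l * h3))
            (Q (X i) (Y j) ((INR a3 - INR l) * h3))))))))
  = Cmult (csum L1 (fun a1 => csum L2 (fun a2 => csum L3 (fun a3 =>
             P (INR a1 * h1) (INR a2 * h2) (INR a3 * h3)))))
          (csum L1 (fun i => csum L2 (fun j => csum L3 (fun l => Q (X i) (Y j) (INR l * h3))))).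
Proof.
  intros HL1 HL2 HL3 HPx HPy HQ.
  set (Rq := fun i j => csum L3 (fun a3 => Q (X i) (Y j) (INR a3 * h3))).
  set (SP := csum L1 (fun a1 => csum L2 (fun a2 => csum L3 (fun a3 =>
               P (INR a1 * h1) (INR a2 * h2) (INR a3 * h3))))).
  transitivity (csum L1 (fun a1 => csum L2 (fun a2 =>
     csum L1 (fun i => csum L2 (fun j => csum L3 (fun l =>
       Cmult (P ((INR a1 - INR i) * h1) ((INR a2 - INR j) * h2) (INR l * h3)) (Rq i j))))))).
  { apply csum_ext; intros a1 _. apply csum_ext; intros a2 _.
    rewrite csum_swap. apply csum_ext; intros i _.
    rewrite csum_swap. apply csum_ext; intros j _.
    rewrite csum_swap. apply csum_ext; intros l _.
    rewrite csum_mull. f_equal. unfold Rq.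
    apply (csum_shift_periodic_scaled L3 h3 (fun t => Q (X i) (Y j) t)); auto. }
  transitivity (csum L1 (fun i => csum L2 (fun j => Cmult SP (Rq i j)))).
  { transitivity (csum L1 (fun a1 => csum L1 (fun i => csum L2 (fun a2 => csum L2 (fun j =>
       csum L3 (fun l =>
         Cmult (P ((INR a1 - INR i) * h1) ((INR a2 - INR j) * h2) (INR l * h3)) (Rq i j))))))).
    { apply csum_ext; intros a1 _. apply csum_swap. }
    rewrite csum_swap. apply csum_ext; intros i _.
    transitivity (csum L1 (fun a1 => csum L2 (fun j => csum L2 (fun a2 => csum L3 (fun l =>
       Cmult (P ((INR a1 - INR i) * h1) ((INR a2 - INR j) * h2) (INR l * h3)) (Rq i j)))))).
    { apply csum_ext; intros a1 _. apply csum_swap. }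
    rewrite csum_swap. apply csum_ext; intros j _.
    transitivity (csum L1 (fun a1 => Cmult (csum L2 (fun a2 => csum L3 (fun l =>
       P ((INR a1 - INR i) * h1) ((INR a2 - INR j) * h2) (INR l * h3)))) (Rq i j))).
    { apply csum_ext; intros a1 _. rewrite <- csum_mulr. apply csum_ext; intros a2 _.
      rewrite <- csum_mulr. reflexivity. }
    rewrite csum_mulr. f_equal. unfold SP.
    rewrite (csum_shift_periodic_scaled L1 h1 (fun x => csum L2 (fun a2 => csum L3 (fun l =>
               P x ((INR a2 - INR j) * h2) (INR l * h3))))).
    - apply csum_ext; intros a1 _.
      apply (csum_shift_periodic_scaled L2 h2 (fun y => csum L3 (fun l => P (INR a1 * h1) y (INR l * h3))));
        auto.
      intros; apply csum_ext; intros; apply HPy.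
    - auto.
    - intros; apply csum_ext; intros; apply csum_ext; intros; apply HPx. }
  rewrite <- csum_mull. apply csum_ext; intros i _. rewrite <- csum_mull. reflexivity.
Qed.

Lemma conv_integrand_on_grid psi rho k L1 L2 L3 a1 a2 a3 i j l :
  Cmult (conv_integrand psi rho (grid_x L1 a1, grid_x L2 a2, grid_t L3 a3)
           (grid_x L1 a1 + / 2 - INR i * / INR L1) (grid_x L2 a2 + / 2 - INR j * / INR L2)
           (INR l * (2 * PI / INR L3)))
        (phik_bar k (grid_x L1 a1, grid_x L2 a2, grid_t L3 a3))
  = Cmult (Cmult (psi ((INR a1 - INR i) * / INR L1, (INR a2 - INR j) * / INR L2, INR l * (2 * PI / INR L3)))
                 (phik_bar k ((INR a1 - INR i) * / INR L1, (INR a2 - INR j) * / INR L2, INR l * (2 * PI / INR L3))))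
          (Cmult (rho (grid_x L1 i, grid_x L2 j, (INR a3 - INR l) * (2 * PI / INR L3)))
                 (phik_bar k (grid_x L1 i, grid_x L2 j, (INR a3 - INR l) * (2 * PI / INR L3)))).
Proof.
  unfold conv_integrand, px, py, pt; cbn [fst snd].
  replace (grid_x L1 a1 + / 2 - INR i * / INR L1) with ((INR a1 - INR i) * / INR L1)
    by (unfold grid_x, Rdiv; ring).
  replace (grid_x L2 a2 + / 2 - INR j * / INR L2) with ((INR a2 - INR j) * / INR L2)
    by (unfold grid_x, Rdiv; ring).
  replace (grid_x L1 a1 - (INR a1 - INR i) * / INR L1) with (grid_x L1 i) by (unfold grid_x, Rdiv; ring).
  replace (grid_x L2 a2 - (INR a2 - INR j) * / INR L2) with (grid_x L2 j) by (unfold grid_x, Rdiv; ring).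
  replace (grid_t L3 a3 - INR l * (2 * PI / INR L3)) with ((INR a3 - INR l) * (2 * PI / INR L3))
    by (unfold grid_t, Rdiv; ring).
  replace (phik_bar k (grid_x L1 a1, grid_x L2 a2, grid_t L3 a3)) with
    (Cmult (phik_bar k ((INR a1 - INR i) * / INR L1, (INR a2 - INR j) * / INR L2, INR l * (2 * PI / INR L3)))
           (phik_bar k (grid_x L1 i, grid_x L2 j, (INR a3 - INR l) * (2 * PI / INR L3)))).
  - ring.
  - rewrite <- phik_bar_add. do 3 f_equal; unfold grid_x, grid_t, Rdiv; ring.
Qed.

Lemma csum3_mull c n1 n2 n3 (F : nat -> nat -> nat -> C) :
  Cmult c (csum n1 (fun a => csum n2 (fun b => csum n3 (fun d => F a b d)))) =
  csum n1 (fun a => csum n2 (fun b => csum n3 (fun d => Cmult c (F a b d)))).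
Proof.
  rewrite <- csum_mull. apply csum_ext; intros. rewrite <- csum_mull. apply csum_ext; intros.
  rewrite <- csum_mull. reflexivity.
Qed.

Lemma dft_conv_riemann psi rho k L1 L2 L3 :
  on_X psi -> (forall x y t, rho (x, y, t + 2 * PI) = rho (x, y, t)) ->
  (1 <= L1)%nat -> (1 <= L2)%nat -> (1 <= L3)%nat ->
  dft (conv_riemann psi rho L1 L2 L3) k (L1, L2, L3) =
  Cmult (dft0 psi k L1 L2 L3) (dft rho k (L1, L2, L3)).
Proof.
  intros [Hp1 _] Hr HL1 HL2 HL3.
  pose proof PI_RGT_0 as HPI.
  assert (HI1 : 0 < INR L1) by (apply lt_0_INR; lia).
  assert (HI2 : 0 < INR L2) by (apply lt_0_INR; lia).
  assert (HI3 : 0 < INR L3) by (apply lt_0_INR; lia).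
  set (P := fun x y t => Cmult (psi (x, y, t)) (phik_bar k (x, y, t))).
  set (Q := fun x y t => Cmult (rho (x, y, t)) (phik_bar k (x, y, t))).
  set (N := RtoC (/ (INR L1 * INR L2 * INR L3))).
  pose proof (csum_convolution P Q (grid_x L1) (grid_x L2) L1 L2 L3
                (/ INR L1) (/ INR L2) (2 * PI / INR L3) HL1 HL2 HL3) as CA.
  rewrite dft_csum. fold N.
  transitivity (Cmult N (csum L1 (fun a1 => csum L2 (fun a2 => csum L3 (fun a3 =>
    Cmult N (csum L1 (fun i => csum L2 (fun j => csum L3 (fun l =>
      Cmult (P ((INR a1 - INR i) * / INR L1) ((INR a2 - INR j) * / INR L2) (INR l * (2 * PI / INR L3)))
            (Q (grid_x L1 i) (grid_x L2 j) ((INR a3 - INR l) * (2 * PI / INR L3)))))))))))).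
  { f_equal. apply csum_ext; intros a1 _. apply csum_ext; intros a2 _. apply csum_ext; intros a3 _.
    unfold conv_riemann, px, py, pt. cbn [fst snd]. fold N.
    rewrite <- Cmult_assoc, <- csum_mulr. f_equal.
    apply csum_ext; intros i _. rewrite <- csum_mulr. apply csum_ext; intros j _.
    rewrite <- csum_mulr. apply csum_ext; intros l _.
    rewrite conv_integrand_on_grid. reflexivity. }
  rewrite <- csum3_mull, CA.
  - unfold dft0. rewrite dft_csum. fold N.
    match goal with |- Cmult _ (Cmult _ (Cmult ?A ?B)) = Cmult (Cmult _ ?A') (Cmult _ ?B') =>
      replace A' with A; [replace B' with B; [ring|] |] end.
    + apply csum_ext; intros i _. apply csum_ext; intros j _. apply csum_ext; intros l _.
      unfold Q. do 2 f_equal; f_equal; unfold grid_t, Rdiv; ring.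
    + apply csum_ext; intros i _. apply csum_ext; intros j _. apply csum_ext; intros l _.
      unfold P. do 2 f_equal; f_equal; unfold grid_t, Rdiv; ring.
  - intros x y t. unfold P.
    replace (x + INR L1 * / INR L1) with (x + IZR 1) by (simpl; field; lra).
    rewrite phik_bar_periodic_x. rewrite <- (Hp1 1%Z 0%Z x y t).
    replace (y + IZR 0) with y by (simpl; ring). reflexivity.
  - intros x y t. unfold P.
    replace (y + INR L2 * / INR L2) with (y + IZR 1) by (simpl; field; lra).
    rewrite phik_bar_periodic_y. rewrite <- (Hp1 0%Z 1%Z x y t).
    replace (x + IZR 0) with x by (simpl; ring). reflexivity.
  - intros x y t. unfold Q.
    replace (t + INR L3 * (2 * PI / INR L3)) with (t + 2 * PI) by (field; lra).
    rewrite phik_bar_periodic_t, Hr. reflexivity.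
Qed.

Section HalfMeshShift.

Variables (g e : R -> C) (M : R) (L : nat).
Hypothesis g_periodic : forall x, g (x + 1) = g x.
Hypothesis g_lipschitz : lipschitz g M.
Hypothesis e_add : forall x y, e (x + y) = Cmult (e x) (e y).
Hypothesis e_periodic : forall x, e (x + 1) = e x.
Hypothesis Cmod_e : forall x, Cmod (e x) = 1.
Hypothesis L_pos : (1 <= L)%nat.

Let G x := Cmult (g x) (e x).
Let h := / INR L.

Let INR_L_pos : 0 < INR L.
Proof. apply lt_0_INR. lia. Qed.

Let h_pos : 0 < h.
Proof. apply Rinv_0_lt_compat, INR_L_pos. Qed.

Let L_h : INR L * h = 1.
Proof. unfold h. field. apply Rgt_not_eq, INR_L_pos. Qed.

Let G_periodic_grid : forall x, G ((x + INR L) * h) = G (x * h).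
Proof.
  intros x. replace ((x + INR L) * h) with (x * h + 1) by (rewrite Rmult_plus_distr_r, L_h; ring).
  unfold G. rewrite g_periodic, e_periodic. reflexivity.
Qed.

(* Summation by parts: multiplying by [e h] moves the character one mesh step. *)
Lemma grid_sum_mul_step_le :
  Cmod (Cmult (csum L (fun a => G (INR a * h))) (Cminus (e h) (RtoC 1))) <= M.
Proof.
  set (P := fun r => Cmult (g ((r - 1) * h)) (e (r * h))).
  assert (HP : forall x, P (x + INR L) = P x).
  { intros x. unfold P.
    replace ((x + INR L - 1) * h) with ((x - 1) * h + 1) by (rewrite <- L_h; ring).
    replace ((x + INR L) * h) with (x * h + 1) by (rewrite <- L_h; ring).
    rewrite g_periodic, e_periodic. reflexivity. }
  assert (Eh : Cmult (csum L (fun a => G (INR a * h))) (e h) = csum L (fun a => P (INR a))).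
  { rewrite <- csum_mulr.
    transitivity (csum L (fun a => P (INR a + 1))).
    - apply csum_ext; intros a _. unfold P, G.
      replace ((INR a + 1 - 1) * h) with (INR a * h) by ring.
      replace ((INR a + 1) * h) with (INR a * h + h) by ring. rewrite e_add. ring.
    - rewrite <- (csum_shift_periodic L P 1 1 L_pos HP).
      apply csum_ext; intros a _. f_equal. simpl. ring. }
  replace (Cmult (csum L (fun a => G (INR a * h))) (Cminus (e h) (RtoC 1)))
    with (Cminus (csum L (fun a => P (INR a))) (csum L (fun a => G (INR a * h))))
    by (rewrite <- Eh; ring).
  rewrite <- csum_minus.
  apply Rle_trans with (INR L * (M * h));
    [|right; transitivity (M * (INR L * h)); [ring | rewrite L_h; ring]].
  apply Cmod_csum_le. intros a _. unfold P, G.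
  replace (Cminus (Cmult (g ((INR a - 1) * h)) (e (INR a * h))) (Cmult (g (INR a * h)) (e (INR a * h))))
    with (Cmult (Cminus (g ((INR a - 1) * h)) (g (INR a * h))) (e (INR a * h))) by ring.
  rewrite Cmod_mult, Cmod_e, Rmult_1_r.
  eapply Rle_trans; [apply g_lipschitz|].
  right. f_equal. replace ((INR a - 1) * h - INR a * h) with (- h) by ring.
  rewrite Rabs_Ropp. apply Rabs_right. lra.
Qed.

Lemma grid_sum_half_step_le :
  Cmod (Cminus (csum L (fun a => G (INR a * h + h / 2)))
               (Cmult (e (h / 2)) (csum L (fun a => G (INR a * h))))) <= M / 2.
Proof.
  rewrite <- csum_mull, <- csum_minus.
  apply Rle_trans with (INR L * (M * (h / 2)));
    [|right; transitivity (M * (INR L * h) / 2); [field | rewrite L_h; field]].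
  apply Cmod_csum_le. intros a _. unfold G. rewrite e_add.
  replace (Cminus (Cmult (g (INR a * h + h / 2)) (Cmult (e (INR a * h)) (e (h / 2))))
                  (Cmult (e (h / 2)) (Cmult (g (INR a * h)) (e (INR a * h)))))
    with (Cmult (Cminus (g (INR a * h + h / 2)) (g (INR a * h))) (Cmult (e (INR a * h)) (e (h / 2))))
    by ring.
  rewrite !Cmod_mult, !Cmod_e, !Rmult_1_r.
  eapply Rle_trans; [apply g_lipschitz|].
  right. f_equal. replace (INR a * h + h / 2 - INR a * h) with (h / 2) by ring.
  apply Rabs_right. lra.
Qed.

(* For odd [L = 2K + 1] the grid [-1/2 + a/L] is the grid [a/L] moved by half a mesh.
   The half-step bound compares the two sums up to the factor [e (h/2)]; the step bound,
   divided by [e (h/2) + 1] (of modulus at least 1 by hypothesis), removes that factor. *)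
Lemma half_mesh_shift (K : nat) :
  L = (2 * K + 1)%nat ->
  1 <= Cmod (Cplus (e (h / 2)) (RtoC 1)) ->
  Cmod (Cminus (csum L (fun a => G (- / 2 + INR a * h))) (csum L (fun a => G (INR a * h))))
  <= 3 / 2 * M.
Proof.
  intros HK Hkey.
  set (A0 := csum L (fun a => G (INR a * h))).
  assert (Eshift : csum L (fun a => G (- / 2 + INR a * h)) = csum L (fun a => G (INR a * h + h / 2))).
  { pose proof (csum_shift_periodic L (fun r => G (r * h)) (/ 2) (K + 1) L_pos) as H.
    cbv beta in H.
    transitivity (csum L (fun a => G ((INR a + / 2 - INR (K + 1)) * h))).
    - apply csum_ext; intros a _. f_equal.
      assert (HLK : INR L = 2 * INR K + 1) by (rewrite HK, plus_INR, mult_INR; simpl; ring).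
      unfold h. rewrite plus_INR, HLK. simpl. field. pose proof (pos_INR K). lra.
    - rewrite H by apply G_periodic_grid. apply csum_ext; intros a _. f_equal. field. }
  assert (Estep : Cmult A0 (Cminus (e h) (RtoC 1)) =
                  Cmult (Cmult A0 (Cminus (e (h / 2)) (RtoC 1))) (Cplus (e (h / 2)) (RtoC 1))).
  { replace h with (h / 2 + h / 2) at 1 by field. rewrite e_add. ring. }
  assert (Bstep : Cmod (Cmult A0 (Cminus (e (h / 2)) (RtoC 1))) <= M).
  { eapply Rle_trans; [|apply grid_sum_mul_step_le]. fold A0.
    rewrite Estep, (Cmod_mult (Cmult A0 (Cminus (e (h / 2)) (RtoC 1)))).
    pose proof (Cmod_ge_0 (Cmult A0 (Cminus (e (h / 2)) (RtoC 1)))). nra. }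
  rewrite Eshift. fold A0.
  replace (Cminus (csum L (fun a => G (INR a * h + h / 2))) A0) with
    (Cplus (Cminus (csum L (fun a => G (INR a * h + h / 2))) (Cmult (e (h / 2)) A0))
           (Cmult A0 (Cminus (e (h / 2)) (RtoC 1)))) by ring.
  eapply Rle_trans; [apply Cmod_triangle|].
  pose proof grid_sum_half_step_le. fold A0 in H. lra.
Qed.

End HalfMeshShift.

Definition phik_bar_x k x := phik_bar k (x, 0, 0).
Definition phik_bar_y k y := phik_bar k (0, y, 0).

Lemma phik_bar_split_x k x y t : phik_bar k (x, y, t) = Cmult (phik_bar_x k x) (phik_bar k (0, y, t)).
Proof. unfold phik_bar_x. rewrite <- phik_bar_add. do 3 f_equal; ring. Qed.

Lemma phik_bar_split_y k x y t : phik_bar k (x, y, t) = Cmult (phik_bar_y k y) (phik_bar k (x, 0, t)).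
Proof. unfold phik_bar_y. rewrite <- phik_bar_add. do 3 f_equal; ring. Qed.

Lemma phik_bar_x_add k x y : phik_bar_x k (x + y) = Cmult (phik_bar_x k x) (phik_bar_x k y).
Proof. unfold phik_bar_x. rewrite <- phik_bar_add. do 3 f_equal; ring. Qed.

Lemma phik_bar_y_add k x y : phik_bar_y k (x + y) = Cmult (phik_bar_y k x) (phik_bar_y k y).
Proof. unfold phik_bar_y. rewrite <- phik_bar_add. do 3 f_equal; ring. Qed.

Lemma phik_bar_x_periodic k x : phik_bar_x k (x + 1) = phik_bar_x k x.
Proof. apply (phik_bar_periodic_x k x 0 0 1). Qed.

Lemma phik_bar_y_periodic k y : phik_bar_y k (y + 1) = phik_bar_y k y.
Proof. apply (phik_bar_periodic_y k 0 y 0 1). Qed.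

(* [Re (conj (e^{i a}) + 1) = 1 + cos a >= 1] for [|a| <= pi/2]. *)
Lemma Cmod_conj_cexpi_plus_1_ge a : - (PI / 2) <= a <= PI / 2 ->
  1 <= Cmod (Cplus (Cconj (Cmult (cexpi a) (cexpi 0))) (RtoC 1)).
Proof.
  intros Ha. eapply Rle_trans; [|apply re_le_Cmod].
  unfold cexpi, Cconj, Cmult, Re; simpl. rewrite cos_0, sin_0.
  pose proof (cos_ge_0 a (proj1 Ha) (proj2 Ha)).
  rewrite Rabs_right; lra.
Qed.

(* [|k| <= K] is exactly what keeps the half-mesh phase [pi k / (2K + 1)] below [pi/2]. *)
Lemma half_mesh_phase_range (z : Z) (K : nat) : (Z.abs z <= Z.of_nat K)%Z ->
  - (PI / 2) <= 2 * PI * (IZR z * (/ INR (2 * K + 1) / 2)) <= PI / 2.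
Proof.
  intros Hk. pose proof PI_RGT_0.
  assert (HK : INR (2 * K + 1) = 2 * INR K + 1) by (rewrite plus_INR, mult_INR; simpl; ring).
  assert (Hz : Rabs (IZR z) <= INR K) by (rewrite <- abs_IZR, INR_IZR_INZ; apply IZR_le; auto).
  pose proof (pos_INR K).
  replace (2 * PI * (IZR z * (/ INR (2 * K + 1) / 2))) with (PI * (IZR z / (2 * INR K + 1)))
    by (rewrite HK; field; lra).
  assert (Hq : Rabs (IZR z / (2 * INR K + 1)) <= / 2).
  { unfold Rdiv. rewrite Rabs_mult, (Rabs_right (/ _)) by (apply Rle_ge, Rlt_le, Rinv_0_lt_compat; lra).
    apply (Rmult_le_reg_r (2 * INR K + 1)); [lra|]. rewrite Rmult_assoc, Rinv_l by lra. lra. }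
  unfold Rabs in Hq; destruct Rcase_abs in Hq; split; nra.
Qed.

Lemma phik_bar_x_half_mesh k K : (Z.abs (fst (fst k)) <= Z.of_nat K)%Z ->
  1 <= Cmod (Cplus (phik_bar_x k (/ INR (2 * K + 1) / 2)) (RtoC 1)).
Proof.
  intros Hk. unfold phik_bar_x, phik_bar, phik, px, py, pt. cbn [fst snd].
  rewrite !Rmult_0_r, Rplus_0_r.
  apply Cmod_conj_cexpi_plus_1_ge, half_mesh_phase_range, Hk.
Qed.

Lemma phik_bar_y_half_mesh k K : (Z.abs (snd (fst k)) <= Z.of_nat K)%Z ->
  1 <= Cmod (Cplus (phik_bar_y k (/ INR (2 * K + 1) / 2)) (RtoC 1)).
Proof.
  intros Hk. unfold phik_bar_y, phik_bar, phik, px, py, pt. cbn [fst snd].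
  rewrite !Rmult_0_r, Rplus_0_l.
  apply Cmod_conj_cexpi_plus_1_ge, half_mesh_phase_range, Hk.
Qed.

Lemma csum3_minus n1 n2 n3 (A B : nat -> nat -> nat -> C) :
  Cminus (csum n1 (fun i => csum n2 (fun j => csum n3 (fun l => A i j l))))
         (csum n1 (fun i => csum n2 (fun j => csum n3 (fun l => B i j l)))) =
  csum n1 (fun i => csum n2 (fun j => csum n3 (fun l => Cminus (A i j l) (B i j l)))).
Proof.
  rewrite <- csum_minus. apply csum_ext; intros. rewrite <- csum_minus. apply csum_ext; intros.
  rewrite <- csum_minus. reflexivity.
Qed.

Lemma csum_grid_x_half_shift_le psi Mp k K y t :
  on_X psi -> (forall y t, lipschitz (fun x => psi (x, y, t)) Mp) ->
  (Z.abs (fst (fst k)) <= Z.of_nat K)%Z ->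
  let L := (2 * K + 1)%nat in
  Cmod (Cminus (csum L (fun a => Cmult (psi (grid_x L a, y, t)) (phik_bar k (grid_x L a, y, t))))
               (csum L (fun a => Cmult (psi (INR a * / INR L, y, t))
                                       (phik_bar k (INR a * / INR L, y, t)))))
  <= 3 / 2 * Mp.
Proof.
  intros [Hp _] Lx Hk L.
  set (g := fun x => Cmult (psi (x, y, t)) (phik_bar k (0, y, t))).
  assert (Hg : forall x, g (x + 1) = g x).
  { intros x. unfold g. f_equal. rewrite <- (Hp 1%Z 0%Z x y t). do 3 f_equal. simpl. ring. }
  assert (HLg : lipschitz g Mp) by (apply lipschitz_mulr; [apply Cmod_phik_bar | apply Lx]).
  pose proof (half_mesh_shift g (phik_bar_x k) Mp L Hg HLg (phik_bar_x_add k)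
                (phik_bar_x_periodic k) (fun x => Cmod_phik_bar k _) ltac:(unfold L; lia) K eq_refl
                (phik_bar_x_half_mesh k K Hk)) as H.
  eapply Rle_trans; [|apply H]. right. do 2 f_equal; apply csum_ext; intros a _;
    unfold g, grid_x, Rdiv; rewrite phik_bar_split_x; ring.
Qed.

Lemma csum_grid_y_half_shift_le psi Mp k K x t :
  on_X psi -> (forall x t, lipschitz (fun y => psi (x, y, t)) Mp) ->
  (Z.abs (snd (fst k)) <= Z.of_nat K)%Z ->
  let L := (2 * K + 1)%nat in
  Cmod (Cminus (csum L (fun a => Cmult (psi (x, grid_x L a, t)) (phik_bar k (x, grid_x L a, t))))
               (csum L (fun a => Cmult (psi (x, INR a * / INR L, t))
                                       (phik_bar k (x, INR a * / INR L, t)))))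
  <= 3 / 2 * Mp.
Proof.
  intros [Hp _] Ly Hk L.
  set (g := fun y => Cmult (psi (x, y, t)) (phik_bar k (x, 0, t))).
  assert (Hg : forall y, g (y + 1) = g y).
  { intros y. unfold g. f_equal. rewrite <- (Hp 0%Z 1%Z x y t). do 3 f_equal. simpl. ring. }
  assert (HLg : lipschitz g Mp) by (apply lipschitz_mulr; [apply Cmod_phik_bar | apply Ly]).
  pose proof (half_mesh_shift g (phik_bar_y k) Mp L Hg HLg (phik_bar_y_add k)
                (phik_bar_y_periodic k) (fun y => Cmod_phik_bar k _) ltac:(unfold L; lia) K eq_refl
                (phik_bar_y_half_mesh k K Hk)) as H.
  eapply Rle_trans; [|apply H]. right. do 2 f_equal; apply csum_ext; intros a _;
    unfold g, grid_x, Rdiv; rewrite phik_bar_split_y; ring.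
Qed.

Lemma dft_minus_dft0_le psi Mp k K1 K2 L3 :
  on_X psi -> lip_bounded psi Mp ->
  (Z.abs (fst (fst k)) <= Z.of_nat K1)%Z -> (Z.abs (snd (fst k)) <= Z.of_nat K2)%Z ->
  (1 <= L3)%nat ->
  Cmod (Cminus (dft psi k (2 * K1 + 1, 2 * K2 + 1, L3)%nat)
               (dft0 psi k (2 * K1 + 1) (2 * K2 + 1) L3))
  <= 3 / 2 * Mp * (/ INR (2 * K1 + 1) + / INR (2 * K2 + 1)).
Proof.
  intros HX [M0 [Lx [Ly _]]] Hk1 Hk2 HL3.
  set (L1 := (2 * K1 + 1)%nat). set (L2 := (2 * K2 + 1)%nat).
  assert (HI1 : 0 < INR L1) by (apply lt_0_INR; unfold L1; lia).
  assert (HI2 : 0 < INR L2) by (apply lt_0_INR; unfold L2; lia).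
  assert (HI3 : 0 < INR L3) by (apply lt_0_INR; lia).
  set (Smid := csum L1 (fun i => csum L2 (fun j => csum L3 (fun l =>
      Cmult (psi (INR i * / INR L1, grid_x L2 j, grid_t L3 l))
            (phik_bar k (INR i * / INR L1, grid_x L2 j, grid_t L3 l)))))).
  rewrite dft_csum. unfold dft0.
  match goal with |- Cmod (Cminus (Cmult ?c ?S) (Cmult ?c ?S0)) <= _ =>
    replace (Cminus (Cmult c S) (Cmult c S0))
      with (Cmult c (Cplus (Cminus S Smid) (Cminus Smid S0))) by ring end.
  apply Rle_trans with (/ (INR L1 * INR L2 * INR L3) *
    (INR L2 * (INR L3 * (3 / 2 * Mp)) + INR L1 * (INR L3 * (3 / 2 * Mp)))).
  2:{ right. field. repeat split; lra. }
  apply Cmod_RtoC_mult_le; [apply Rlt_le, Rinv_0_lt_compat; repeat apply Rmult_lt_0_compat; lra|].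
  eapply Rle_trans; [apply Cmod_triangle|]. apply Rplus_le_compat; unfold Smid.
  - rewrite csum3_minus, csum_swap.
    apply Cmod_csum_le. intros j _. rewrite csum_swap. apply Cmod_csum_le. intros l _.
    rewrite csum_minus. apply (csum_grid_x_half_shift_le psi Mp k K1); auto.
  - rewrite csum3_minus.
    apply Cmod_csum_le. intros i _. rewrite csum_swap. apply Cmod_csum_le. intros l _.
    rewrite csum_minus. apply (csum_grid_y_half_shift_le psi Mp k K2); auto.
Qed.

Lemma dft_conv_error psi rho Mp Mr k K1 K2 L3 :
  on_X psi -> (forall x y t, rho (x, y, t + 2 * PI) = rho (x, y, t)) ->
  radial rho -> vanishes_off_square rho ->
  lip_bounded psi Mp -> lip_bounded rho Mr ->
  (Z.abs (fst (fst k)) <= Z.of_nat K1)%Z -> (Z.abs (snd (fst k)) <= Z.of_nat K2)%Z ->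
  (1 <= L3)%nat ->
  Cmod (Cminus (dft (conv psi rho) k (2 * K1 + 1, 2 * K2 + 1, L3)%nat)
               (Cmult (dft psi k (2 * K1 + 1, 2 * K2 + 1, L3)%nat)
                      (dft rho k (2 * K1 + 1, 2 * K2 + 1, L3)%nat)))
  <= 2 * Mp * Mr * (/ INR (2 * K1 + 1) + / INR (2 * K2 + 1) + 2 * PI / INR L3)
     + 3 / 2 * Mp * (/ INR (2 * K1 + 1) + / INR (2 * K2 + 1)) * Mr.
Proof.
  intros HX Hr Hrad Hv Hpsi Hrho Hk1 Hk2 HL3.
  assert (HL1 : (1 <= 2 * K1 + 1)%nat) by lia.
  assert (HL2 : (1 <= 2 * K2 + 1)%nat) by lia.
  pose proof (Cmod_dft_le rho k _ _ _ Mr HL1 HL2 HL3 (proj2 (proj2 (proj2 (proj2 Hrho))))) as Hdr.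
  pose proof (dft_minus_dft0_le psi Mp k K1 K2 L3 HX Hpsi Hk1 Hk2 HL3) as Hshift.
  assert (Hriem : Cmod (Cminus (dft (conv psi rho) k (2 * K1 + 1, 2 * K2 + 1, L3)%nat)
       (dft (conv_riemann psi rho (2 * K1 + 1) (2 * K2 + 1) L3) k (2 * K1 + 1, 2 * K2 + 1, L3)%nat))
     <= 2 * Mp * Mr * (/ INR (2 * K1 + 1) + / INR (2 * K2 + 1) + 2 * PI / INR L3)).
  { rewrite dft_minus. apply Cmod_dft_le; auto. intros c. apply conv_riemann_error; auto. }
  rewrite dft_conv_riemann in Hriem by auto.
  set (L := (2 * K1 + 1, 2 * K2 + 1, L3)%nat) in *.
  replace (Cminus (dft (conv psi rho) k L) (Cmult (dft psi k L) (dft rho k L))) with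
    (Cplus (Cminus (dft (conv psi rho) k L)
                   (Cmult (dft0 psi k (2 * K1 + 1) (2 * K2 + 1) L3) (dft rho k L)))
           (Cmult (Cminus (dft0 psi k (2 * K1 + 1) (2 * K2 + 1) L3) (dft psi k L)) (dft rho k L)))
    by ring.
  eapply Rle_trans; [apply Cmod_triangle|]. apply Rplus_le_compat; [exact Hriem|].
  rewrite Cmod_mult, <- Cmod_opp.
  replace (Copp (Cminus (dft0 psi k (2 * K1 + 1) (2 * K2 + 1) L3) (dft psi k L)))
    with (Cminus (dft psi k L) (dft0 psi k (2 * K1 + 1) (2 * K2 + 1) L3)) by ring.
  apply Rmult_le_compat; auto using Cmod_ge_0.
Qed.

Lemma grid_error_le_inv_min A B (K1 K2 K3 : nat) :
  0 <= A -> 0 <= B -> (1 <= K1)%nat -> (1 <= K2)%nat -> (1 <= K3)%nat ->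
  A * (/ INR (2 * K1 + 1) + / INR (2 * K2 + 1) + 2 * PI / INR (2 * K3 + 1))
    + B * (/ INR (2 * K1 + 1) + / INR (2 * K2 + 1))
  <= (A * (2 + 2 * PI) + 2 * B) / INR (Nat.min (Nat.min K1 K2) K3).
Proof.
  intros HA HB HK1 HK2 HK3. pose proof PI_RGT_0.
  set (m := Nat.min (Nat.min K1 K2) K3).
  assert (Hm : 0 < INR m) by (apply lt_0_INR; unfold m; lia).
  assert (Hinv : forall K : nat, (m <= K)%nat -> / INR (2 * K + 1) <= / INR m).
  { intros K HK. apply Rinv_le_contravar; auto. apply le_INR. lia. }
  assert (H1 := Hinv K1 ltac:(unfold m; lia)).
  assert (H2 := Hinv K2 ltac:(unfold m; lia)).
  assert (H3 := Hinv K3 ltac:(unfold m; lia)).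
  assert (P1 : 0 <= / INR (2 * K1 + 1)) by (apply Rlt_le, Rinv_0_lt_compat, lt_0_INR; lia).
  assert (P2 : 0 <= / INR (2 * K2 + 1)) by (apply Rlt_le, Rinv_0_lt_compat, lt_0_INR; lia).
  unfold Rdiv. rewrite (Rmult_comm (2 * PI)).
  apply Rle_trans with (A * (/ INR m + / INR m + / INR m * (2 * PI)) + B * (/ INR m + / INR m)).
  - apply Rplus_le_compat; apply Rmult_le_compat_l; auto.
    + apply Rplus_le_compat; [lra|]. apply Rmult_le_compat_r; lra.
    + lra.
  - right. ring.
Qed.

Theorem mainTheorem8 (psi rho : SE2 -> C) :
  cont_X psi ->
  C1_SE2 (psiOmega psi) ->
  supported_in (psiOmega psi) (Dop (/4)) ->
  C1_SE2 rho ->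
  supported_in rho (Dcl (/4)) ->
  radial rho ->
  exists Cst : R, 0 < Cst /\
    forall (K1 K2 K3 : nat) (k1 k2 k3 : Z),
      (1 <= K1)%nat -> (1 <= K2)%nat -> (1 <= K3)%nat ->
      (Z.abs k1 <= Z.of_nat K1)%Z -> (Z.abs k2 <= Z.of_nat K2)%Z ->
      (Z.abs k3 <= Z.of_nat K3)%Z ->
      let L := (2 * K1 + 1, 2 * K2 + 1, 2 * K3 + 1)%nat in
      let k := (k1, k2, k3) in
      Cmod (Cminus (dft (conv psi rho) k L)
                   (Cmult (dft psi k L) (dft rho k L)))
        <= Cst / INR (Nat.min (Nat.min K1 K2) K3).
Proof.
  intros [HX _] HC HS HCr HSr Hrad.
  pose proof (supported_in_Dcl_vanishes _ (supported_in_Dop_Dcl _ _ HS)) as Hvpsi.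
  pose proof (supported_in_Dcl_vanishes _ HSr) as Hvrho.
  destruct (C1_vanishing_lip_bounded _ HC Hvpsi) as [M HM].
  pose proof (lift_lip_bounded psi HX Hvpsi M HM) as Hpsi.
  destruct (C1_vanishing_lip_bounded rho HCr Hvrho) as [Mr Hrho].
  set (Mp := M + 8 * M) in Hpsi.
  assert (HMM : 0 <= Mp * Mr) by (apply Rmult_le_pos; [apply Hpsi | apply Hrho]).
  pose proof PI_RGT_0.
  exists (2 * Mp * Mr * (2 + 2 * PI) + 2 * (3 / 2 * Mp * Mr) + 1). split; [nra|].
  (* no condition on [k3] is needed: the theta grid already starts at 0 *)
  intros K1 K2 K3 k1 k2 k3 HK1 HK2 HK3 Hk1 Hk2 _ L k.
  eapply Rle_trans.
  { apply (dft_conv_error psi rho Mp Mr k K1 K2 (2 * K3 + 1)); auto; try lia. apply HCr. }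
  replace (3 / 2 * Mp * (/ INR (2 * K1 + 1) + / INR (2 * K2 + 1)) * Mr)
    with (3 / 2 * Mp * Mr * (/ INR (2 * K1 + 1) + / INR (2 * K2 + 1))) by ring.
  eapply Rle_trans; [apply grid_error_le_inv_min; auto; nra|].
  apply Rmult_le_compat_r; [|lra].
  apply Rlt_le, Rinv_0_lt_compat, lt_0_INR. lia.
Qed.
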